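(* Let $R\ge0$, let $X$ be an $R$-rough geodesic metric space, let $\alpha\colon S\to X$ be an $R$-circle, and consider a tightening sequence for $\alpha$ (with Riemannian circles $S_i$, $R$-circles $\alpha_i\colon S_i\to X$, tightened segments $Q_i$ and maps $\pi^{(i)}\colon S\to S_i$). Suppose the tightening sequence is completely disjoint and $\sum_{i=0}^\infty|Q_i|<|S|$. Let $S_\infty$ be the metric quotient of $(S,\delta)$, where $\delta(x,y)=\lim_i d_{S_i}(\pi^{(i)}(x),\pi^{(i)}(y))$, and let $\sigma\colon S_\infty\to S$ be a section of the quotient map $S\to S_\infty$. Then for every $x\in S_\infty$ the limit $\alpha_\infty(x)=\lim_{i\to\infty}\alpha_i(\pi^{(i)}(\sigma(x)))$ exists, and $\alpha_\infty\colon S_\infty\to X$ is an $R$-circle.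
   Context: $X$ is $R$-rough geodesic if any $x_1,x_2$ are joined by $f\colon[0,\ell]\to X$, $\ell=d(x_1,x_2)$, $f(0)=x_1,f(\ell)=x_2$, with $|d(f(s),f(t))-|s-t||\le R$. An $R$-circle is a map $\beta\colon T\to X$ from a Riemannian circle $T$ (length $|T|$) with $d(\beta(p),\beta(q))\le d_T(p,q)+R$. Tightening sequence for a Riemannian circle $S$: Riemannian circles $S_0=S,S_1,\dots$, spaces $P_i$ (compact intervals or Riemannian circles), maps $\iota_i\colon P_i\hookrightarrow S_i$, $\varphi_i\colon P_i\to S_{i+1}$ with, for each $i$, either (a) $\iota_i,\varphi_i$ continuous unit-speed paths, $\varphi_i$ injective on the interior $\mathring P_i$, $|P_i|\ge|S|/2$, $|S_{i+1}|<|S_i|$; or (b) $P_i=S_i=S_{i+1}$, $\iota_i,\varphi_i$ identities. In case (a) $Q_i=S_i\setminus\iota_i(\mathring P_i)$, $\bar Q_i=S_{i+1}\setminus\varphi_i(\mathring P_i)$ (closed segments, $|\bar Q_i|<|Q_i|$); in case (b) $Q_i=\bar Q_i=\emptyset$. $\pi_i\colon S_i\to S_{i+1}$ equals $\varphi_i\circ\iota_i^{-1}$ on $\iota_i(P_i)$ and is affine from $Q_i$ onto $\bar Q_i$; $\pi^{(i)}=\pi_{i-1}\circ\cdots\circ\pi_0$. With $\mathring P_{0,0}=S$, $\mathring P_{0,j+1}=\mathring P_{0,j}\cap\iota_j(\mathring P_j)$ (in $S_j$), the sequence is completely disjoint if $Q_i\subset\mathring P_{0,i}$ in $S_i$ for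 all $i$. A tightening sequence for the $R$-circle $\alpha$ is a tightening sequence for $S$ with $R$-circles $\alpha_i\colon S_i\to X$, $\alpha_0=\alpha$, and $\alpha_i\circ\iota_i=\alpha_{i+1}\circ\varphi_i$ for all $i$. *)

From Stdlib Require Import Reals Lra List Sorted.
From Coquelicot Require Import Coquelicot.
Open Scope R_scope.

(** The Riemannian circle of length L > 0 is R / L Z; a point is represented
    by any real number, two reals represent the same point iff [eqmod L]. *)
Definition eqmod (L x y : R) : Prop := exists k : Z, x - y = IZR k * L.

Definition cdist (L x y : R) : R :=
  let u := L * frac_part ((x - y) / L) in Rmin u (L - u).

Definition is_metric {X : Type} (d : X -> X -> R) : Prop :=
  (forall x y, 0 <= d x y) /\ (forall x y, d x y = 0 <-> x = y) /\
  (forall x y, d x y = d y x) /\ (forall x y z, d x z <= d x y + d y z).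

Definition rough_geodesic {X : Type} (d : X -> X -> R) (Rr : R) : Prop :=
  forall x1 x2 : X, exists f : R -> X,
    f 0 = x1 /\ f (d x1 x2) = x2 /\
    forall s t, 0 <= s <= d x1 x2 -> 0 <= t <= d x1 x2 ->
      Rabs (d (f s) (f t) - Rabs (s - t)) <= Rr.

(** an R-circle [f] : T -> X with T the Riemannian circle of length L
    (f given on representatives, hence required to be well defined on T) *)
Definition R_circle {X : Type} (d : X -> X -> R) (Rr L : R) (f : R -> X) : Prop :=
  (forall x y, eqmod L x y -> f x = f y) /\
  forall p q, d (f p) (f q) <= cdist L p q + Rr.

Fixpoint psum (L : R) (g : R -> R) (x : R) (l : list R) : R :=
  match l with
  | nil => 0
  | y :: l' => cdist L (g x) (g y) + psum L g y l'
  end.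

Definition partition (s t : R) (l : list R) : Prop :=
  Sorted Rle (s :: l) /\ last (s :: l) s = t.

Definition path_length_is (L : R) (g : R -> R) (s t m : R) : Prop :=
  (forall l, partition s t l -> psum L g s l <= m) /\
  (forall eps, 0 < eps -> exists l, partition s t l /\ m - eps < psum L g s l).

Definition cont_on (L : R) (g : R -> R) (a b : R) : Prop :=
  forall t, a <= t <= b -> forall eps, 0 < eps -> exists eta, 0 < eta /\
    forall s, a <= s <= b -> Rabs (s - t) < eta -> cdist L (g s) (g t) < eps.

Definition unit_speed (L : R) (g : R -> R) (a b : R) : Prop :=
  cont_on L g a b /\
  forall s t, a <= s -> s <= t -> t <= b -> path_length_is L g s t (t - s).

(** c : [0,m] -> circle of length L is an (arc-length) parametrisation of the
    closed segment Q (so |Q| = m) *)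
Definition segment_param (L : R) (Q : R -> Prop) (c : R -> R) (m : R) : Prop :=
  0 <= m /\ unit_speed L c 0 m /\
  (forall s t, 0 <= s <= m -> 0 <= t <= m -> eqmod L (c s) (c t) -> s = t) /\
  (forall x, Q x <-> exists s, 0 <= s <= m /\ eqmod L x (c s)).

(** Data: lengths L i = |S_i|; R-circles alpha i : S_i -> X; kind i = true for
    case (a) (then P_i = [a i, b i]), false for case (b) (P_i = S_i = S_{i+1});
    iota i : P_i -> S_i, phi i : P_i -> S_{i+1}, pi i : S_i -> S_{i+1}. *)

Definition Qset (L : nat -> R) (a b : nat -> R) (iota : nat -> R -> R) (i : nat)
  : R -> Prop :=
  fun x => ~ exists t, a i < t < b i /\ eqmod (L i) x (iota i t).

Definition Qbar (L : nat -> R) (a b : nat -> R) (phi : nat -> R -> R) (i : nat)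
  : R -> Prop :=
  fun y => ~ exists t, a i < t < b i /\ eqmod (L (S i)) y (phi i t).

Definition tightening_seq {X : Type} (d : X -> X -> R) (Rr : R)
  (L : nat -> R) (alpha : nat -> R -> X) (kind : nat -> bool)
  (a b : nat -> R) (iota phi pi : nat -> R -> R) : Prop :=
  (forall i, 0 < L i) /\
  (forall i, R_circle d Rr (L i) (alpha i)) /\
  (forall i x y, eqmod (L i) x y -> eqmod (L (S i)) (pi i x) (pi i y)) /\
  (forall i, kind i = true ->
     L (S i) < L i /\ L O / 2 <= b i - a i /\
     unit_speed (L i) (iota i) (a i) (b i) /\
     (forall s t, a i <= s <= b i -> a i <= t <= b i ->
        eqmod (L i) (iota i s) (iota i t) -> s = t) /\
     unit_speed (L (S i)) (phi i) (a i) (b i) /\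
     (forall s t, a i < s < b i -> a i < t < b i ->
        eqmod (L (S i)) (phi i s) (phi i t) -> s = t) /\
     (forall t, a i <= t <= b i -> alpha i (iota i t) = alpha (S i) (phi i t)) /\
     (forall t, a i <= t <= b i -> eqmod (L (S i)) (pi i (iota i t)) (phi i t)) /\
     (* pi_i is affine from Q_i onto Qbar_i *)
     (exists (c : R -> R) (m : R) (cb : R -> R) (mb : R),
        0 < m /\ segment_param (L i) (Qset L a b iota i) c m /\
        segment_param (L (S i)) (Qbar L a b phi i) cb mb /\
        forall s, 0 <= s <= m -> eqmod (L (S i)) (pi i (c s)) (cb (s * mb / m)))) /\
  (forall i, kind i = false ->
     L (S i) = L i /\
     (forall t, eqmod (L i) (iota i t) t) /\
     (forall t, eqmod (L i) (phi i t) t) /\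
     (forall t, alpha i (iota i t) = alpha (S i) (phi i t)) /\
     (forall t, eqmod (L (S i)) (pi i (iota i t)) (phi i t))).

(** |Q_i| (Q_i = empty in case (b)) *)
Definition Qlengths (L : nat -> R) (kind : nat -> bool) (a b : nat -> R)
  (iota : nat -> R -> R) (qlen : nat -> R) : Prop :=
  forall i, (kind i = true -> exists c, segment_param (L i) (Qset L a b iota i) c (qlen i))
         /\ (kind i = false -> qlen i = 0).

(** interior P_{0,j}, as a subset of S_j *)
Fixpoint Pint (L : nat -> R) (kind : nat -> bool) (a b : nat -> R)
  (iota phi : nat -> R -> R) (j : nat) : R -> Prop :=
  match j with
  | O => fun _ => True
  | S j' =>
      if kind j' then
        fun y => exists t, a j' < t < b j' /\ Pint L kind a b iota phi j' (iota j' t)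
                           /\ eqmod (L (S j')) y (phi j' t)
      else Pint L kind a b iota phi j'
  end.

Definition completely_disjoint (L : nat -> R) (kind : nat -> bool) (a b : nat -> R)
  (iota phi : nat -> R -> R) : Prop :=
  forall i, kind i = true -> forall x, Qset L a b iota i x -> Pint L kind a b iota phi i x.

Fixpoint picomp (pi : nat -> R -> R) (i : nat) (x : R) : R :=
  match i with
  | O => x
  | S i' => pi i' (picomp pi i' x)
  end.

Definition delta (L : nat -> R) (pi : nat -> R -> R) (x y : R) : R :=
  real (Lim_seq (fun i => cdist (L i) (picomp pi i x) (picomp pi i y))).

(** metric quotient S_infty of (S, delta): classes of delta-distance zero *)
Definition Sinf (L : nat -> R) (pi : nat -> R -> R) : Type :=
  {A : R -> Prop | exists x, A = fun y => delta L pi x y = 0}.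

Definition qmap (L : nat -> R) (pi : nat -> R -> R) (x : R) : Sinf L pi :=
  exist _ (fun y => delta L pi x y = 0) (ex_intro _ x eq_refl).

(* The maps pi_i of a tightening sequence lift to nondecreasing 1-Lipschitz degree-one maps
   of the real line: the identity on the lifted arc P_i and an affine contraction of slope
   |Qbar_i| / |Q_i| on the lifted arc Q_i.  Composing these lifts, pi^(i) is represented by
   maps F_i with F_i 0 = 0 and F_i |S| = |S_i| that converge monotonically to a 1-Lipschitz
   map F.  Since |S_i| - |S_(i+1)| <= |Q_i|, the lengths |S_i| decrease to some
   |S_infty| >= |S| - sum |Q_i| > 0, and delta(x, y) is the distance of F x and F y on the
   circle of length |S_infty|; by the intermediate value theorem F induces an isometry of
   S_infty onto that circle.
   Complete disjointness forces alpha_i(pi^(i) x) to be eventually constant: before the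
   orbit of x first meets some Q_i the value does not change, and afterwards the orbit stays
   outside P_(0,i), hence never meets a Q_j again.  The R-circle inequality for alpha_infty
   is the limit of those for the alpha_i. *)

From Stdlib Require Import Reals Lra Lia List Sorted Classical IndefiniteDescription.
From Coquelicot Require Import Coquelicot.
Open Scope R_scope.

Ltac case_Rabs := unfold Rabs in *; repeat match goal with
  | |- context [Rcase_abs ?x] => destruct (Rcase_abs x)
  | H : context [Rcase_abs ?x] |- _ => destruct (Rcase_abs x)
  end; try lra.

Definition is_sign (e : R) : Prop := e = 1 \/ e = -1.

Lemma is_sign_mul e e' : is_sign e -> is_sign e' -> is_sign (e * e').
Proof. unfold is_sign; intros [-> | ->] [-> | ->]; lra. Qed.

Lemma is_sign_sq e : is_sign e -> e * e = 1.
Proof. intros [-> | ->]; ring. Qed.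

(** * Congruences modulo a circle length *)

Lemma eqmod_refl L x : eqmod L x x.
Proof. exists 0%Z. simpl. ring. Qed.

Lemma eqmod_eq L x y : x = y -> eqmod L x y.
Proof. intros ->. apply eqmod_refl. Qed.

Lemma eqmod_sym L x y : eqmod L x y -> eqmod L y x.
Proof. intros [k Hk]. exists (- k)%Z. rewrite opp_IZR. lra. Qed.

Lemma eqmod_trans L x y z : eqmod L x y -> eqmod L y z -> eqmod L x z.
Proof. intros [k Hk] [j Hj]. exists (k + j)%Z. rewrite plus_IZR. lra. Qed.

Lemma eqmod_add L x y x' y' : eqmod L x y -> eqmod L x' y' -> eqmod L (x + x') (y + y').
Proof. intros [k Hk] [j Hj]. exists (k + j)%Z. rewrite plus_IZR. lra. Qed.

Lemma eqmod_addr L r x y : eqmod L x y -> eqmod L (x + r) (y + r).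
Proof. intros H. apply eqmod_add; [exact H | apply eqmod_refl]. Qed.

Lemma eqmod_sign_mul L e x y : is_sign e -> eqmod L x y -> eqmod L (e * x) (e * y).
Proof. intros [-> | ->] [k Hk]; [exists k | exists (- k)%Z]; rewrite ?opp_IZR; lra. Qed.

Lemma eqmod_addZ L x k : eqmod L (x + IZR k * L) x.
Proof. exists k. ring. Qed.

Lemma eqmod_addZ_sign L x k e : is_sign e -> eqmod L (x + IZR k * (e * L)) x.
Proof. intros [-> | ->]; [exists k | exists (- k)%Z]; rewrite ?opp_IZR; ring. Qed.

Lemma eqmod_abs_lt L x y : 0 < L -> eqmod L x y -> Rabs (x - y) < L -> x = y.
Proof.
  intros HL [k Hk] Hxy. rewrite Hk, Rabs_mult, (Rabs_pos_eq L) in Hxy by lra.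
  assert (Hk1 : Rabs (IZR k) < 1) by (apply Rmult_lt_reg_r with L; lra).
  rewrite <- abs_IZR in Hk1. apply lt_IZR in Hk1.
  assert (k = 0%Z) by lia. subst k. simpl in Hk. lra.
Qed.

Lemma floor_mul_bounds L z : 0 < L ->
  IZR (Int_part (z / L)) * L <= z < IZR (Int_part (z / L)) * L + L.
Proof.
  intros HL. destruct (base_Int_part (z / L)) as [B1 B2].
  set (n := IZR (Int_part (z / L))) in *.
  assert (Hz : z = z / L * L) by (field; lra).
  split; rewrite Hz at 1; nra.
Qed.

Lemma eqmod_repr L W : 0 < L -> exists W0 k, W = W0 + IZR k * L /\ 0 <= W0 < L.
Proof.
  intros HL. exists (W - IZR (Int_part (W / L)) * L), (Int_part (W / L)).
  pose proof (floor_mul_bounds L W HL). split; [ring | lra].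
Qed.

(** * The intrinsic distance on a circle *)

Lemma cdist_spec L x y : 0 < L ->
  0 <= cdist L x y <= L / 2 /\
  (forall k, cdist L x y <= Rabs (x - y - IZR k * L)) /\
  exists k, cdist L x y = Rabs (x - y - IZR k * L).
Proof.
  intros HL. unfold cdist, frac_part.
  set (n := Int_part ((x - y) / L)).
  pose proof (floor_mul_bounds L (x - y) HL) as Hn. fold n in Hn.
  replace (L * ((x - y) / L - IZR n)) with (x - y - IZR n * L) by (field; lra).
  split; [|split].
  - unfold Rmin; destruct Rle_dec; lra.
  - intros k. destruct (Z.le_gt_cases k n) as [Hk | Hk].
    + apply IZR_le in Hk.
      assert (IZR k * L <= IZR n * L) by (apply Rmult_le_compat_r; lra).
      rewrite Rabs_pos_eq by lra. unfold Rmin; destruct Rle_dec; lra.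
    + assert (Hk' : (n + 1 <= k)%Z) by lia. apply IZR_le in Hk'. rewrite plus_IZR in Hk'.
      assert ((IZR n + 1) * L <= IZR k * L) by (apply Rmult_le_compat_r; lra).
      rewrite Rabs_left1 by lra. unfold Rmin; destruct Rle_dec; lra.
  - unfold Rmin; destruct Rle_dec.
    + exists n. rewrite Rabs_pos_eq; lra.
    + exists (n + 1)%Z. rewrite plus_IZR, Rabs_left1; lra.
Qed.

Lemma cdist_ge0 L x y : 0 < L -> 0 <= cdist L x y.
Proof. intros HL. apply (cdist_spec L x y HL). Qed.

Lemma cdist_le_abs L x y : 0 < L -> cdist L x y <= Rabs (x - y).
Proof.
  intros HL. destruct (cdist_spec L x y HL) as [_ [H _]].
  specialize (H 0%Z). now rewrite Rmult_0_l, Rminus_0_r in H.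
Qed.

Lemma cdist_diff L x y x' y' j : 0 < L ->
  (x' - y' = x - y + IZR j * L \/ x' - y' = - (x - y) + IZR j * L) ->
  cdist L x' y' = cdist L x y.
Proof.
  intros HL Hj.
  destruct (cdist_spec L x y HL) as [_ [A1 [k0 A2]]].
  destruct (cdist_spec L x' y' HL) as [_ [B1 [k1 B2]]].
  apply Rle_antisym.
  - rewrite A2. destruct Hj as [Hj | Hj].
    + specialize (B1 (k0 + j)%Z). rewrite plus_IZR in B1.
      replace (x' - y' - (IZR k0 + IZR j) * L) with (x - y - IZR k0 * L) in B1 by lra. exact B1.
    + specialize (B1 (j - k0)%Z). rewrite minus_IZR in B1.
      replace (x' - y' - (IZR j - IZR k0) * L) with (- (x - y - IZR k0 * L)) in B1 by lra.
      now rewrite Rabs_Ropp in B1.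
  - rewrite B2. destruct Hj as [Hj | Hj].
    + specialize (A1 (k1 - j)%Z). rewrite minus_IZR in A1.
      replace (x - y - (IZR k1 - IZR j) * L) with (x' - y' - IZR k1 * L) in A1 by lra. exact A1.
    + specialize (A1 (j - k1)%Z). rewrite minus_IZR in A1.
      replace (x - y - (IZR j - IZR k1) * L) with (- (x' - y' - IZR k1 * L)) in A1 by lra.
      now rewrite Rabs_Ropp in A1.
Qed.

Lemma cdist_sym L x y : 0 < L -> cdist L x y = cdist L y x.
Proof. intros HL. apply cdist_diff with 0%Z; auto. right. simpl. lra. Qed.

Lemma cdist_eqmod L x y x' y' : 0 < L -> eqmod L x x' -> eqmod L y y' ->
  cdist L x' y' = cdist L x y.
Proof.
  intros HL [k Hk] [j Hj]. apply cdist_diff with (j - k)%Z; auto. left.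
  rewrite minus_IZR. lra.
Qed.

Lemma cdist_sign_affine L e r x y : 0 < L -> is_sign e ->
  cdist L (e * x + r) (e * y + r) = cdist L x y.
Proof.
  intros HL He. apply cdist_diff with 0%Z; auto. simpl.
  destruct He as [-> | ->]; [left | right]; lra.
Qed.

Lemma cdist_abs_small L x y : 0 < L -> Rabs (x - y) <= L / 2 -> cdist L x y = Rabs (x - y).
Proof.
  intros HL Hs. apply Rle_antisym; [now apply cdist_le_abs |].
  destruct (cdist_spec L x y HL) as [_ [_ [k Hk]]]. rewrite Hk.
  destruct (Z.lt_trichotomy k 0) as [Hk0 | [-> | Hk0]].
  - assert (IZR k <= -1) by (apply IZR_le; lia). assert (IZR k * L <= - L) by nra. case_Rabs.
  - simpl. rewrite Rmult_0_l, Rminus_0_r. lra.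
  - assert (1 <= IZR k) by (apply IZR_le; lia). assert (L <= IZR k * L) by nra. case_Rabs.
Qed.

Lemma cdist_eq0_eqmod L x y : 0 < L -> cdist L x y = 0 -> eqmod L x y.
Proof.
  intros HL H. destruct (cdist_spec L x y HL) as [_ [_ [k Hk]]].
  exists k. rewrite H in Hk. symmetry in Hk. apply Rabs_eq_0 in Hk. lra.
Qed.

Lemma cdist_refl L x : 0 < L -> cdist L x x = 0.
Proof.
  intros HL. apply Rle_antisym; [| now apply cdist_ge0].
  eapply Rle_trans; [apply cdist_le_abs; auto |]. rewrite Rminus_diag, Rabs_R0. lra.
Qed.

Lemma cdist_displacement L x y : 0 < L ->
  exists e, is_sign e /\ eqmod L y (x + e * cdist L x y).
Proof.
  intros HL. destruct (cdist_spec L x y HL) as [_ [_ [k Hk]]].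
  destruct (Rle_dec 0 (x - y - IZR k * L)).
  - exists (-1). split; [now right |]. rewrite Hk, Rabs_pos_eq by lra.
    exists (- k)%Z. rewrite opp_IZR. lra.
  - exists 1. split; [now left |]. rewrite Hk, Rabs_left by lra.
    exists (- k)%Z. rewrite opp_IZR. lra.
Qed.

(* [|x - y| / L + 1] bounds the winding number realising [cdist L x y]. *)
Lemma cdist_perturb L L' x y x' y' : 0 < L -> 0 < L' ->
  cdist L' x' y' <=
  cdist L x y + Rabs ((x' - y') - (x - y)) + (Rabs (x - y) / L + 1) * Rabs (L' - L).
Proof.
  intros HL HL'. destruct (cdist_spec L x y HL) as [[C0 C1] [_ [k Hk]]].
  destruct (cdist_spec L' x' y' HL') as [_ [Hle _]].
  assert (Hkb : Rabs (IZR k) <= Rabs (x - y) / L + 1).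
  { assert (Rabs (IZR k * L) <= Rabs (x - y) + L / 2).
    { rewrite Hk in C1.
      pose proof (Rabs_triang (x - y) (- (x - y - IZR k * L))) as H. rewrite Rabs_Ropp in H.
      replace ((x - y) + - (x - y - IZR k * L)) with (IZR k * L) in H by ring. lra. }
    rewrite Rabs_mult, (Rabs_pos_eq L) in H by lra.
    assert (Rabs (IZR k) <= (Rabs (x - y) + L / 2) / L).
    { apply Rmult_le_reg_r with L; auto. field_simplify; lra. }
    assert ((Rabs (x - y) + L / 2) / L = Rabs (x - y) / L + / 2) by (field; lra). lra. }
  eapply Rle_trans; [apply (Hle k) |].
  replace (x' - y' - IZR k * L')
    with ((x - y - IZR k * L) + ((x' - y') - (x - y)) + (- IZR k * (L' - L))) by ring.
  eapply Rle_trans; [apply Rabs_triang |].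
  eapply Rle_trans; [apply Rplus_le_compat_r, Rabs_triang |].
  rewrite <- Hk, Rabs_mult, Rabs_Ropp.
  assert (Rabs (IZR k) * Rabs (L' - L) <= (Rabs (x - y) / L + 1) * Rabs (L' - L))
    by (apply Rmult_le_compat_r; [apply Rabs_pos | auto]).
  lra.
Qed.

(** * Injective unit-speed paths are isometric *)

Definition cmod (L z : R) : R := z - IZR (Int_part ((z + L / 2) / L)) * L.

Lemma cmod_spec L z : 0 < L -> eqmod L z (cmod L z) /\ - (L / 2) <= cmod L z < L / 2.
Proof.
  intros HL. pose proof (floor_mul_bounds L (z + L / 2) HL). unfold cmod.
  split; [exists (Int_part ((z + L / 2) / L)); ring | lra].
Qed.

Lemma unit_speed_cdist_le L g a b s t : unit_speed L g a b -> a <= s -> s <= t -> t <= b ->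
  cdist L (g s) (g t) <= t - s.
Proof.
  intros [_ H] Hs Hst Ht. destruct (H s t Hs Hst Ht) as [H1 _].
  specialize (H1 (t :: nil)). simpl in H1. rewrite Rplus_0_r in H1. apply H1.
  split; [| reflexivity].
  apply Sorted_cons; [apply Sorted_cons; constructor | constructor; exact Hst].
Qed.

Lemma unit_speed_cdist_le_abs L g a b s t : 0 < L -> unit_speed L g a b ->
  a <= s <= b -> a <= t <= b -> cdist L (g s) (g t) <= Rabs (t - s).
Proof.
  intros HL H Hs Ht. destruct (Rle_dec s t).
  - rewrite Rabs_pos_eq by lra. eapply unit_speed_cdist_le; eauto; lra.
  - rewrite cdist_sym, Rabs_left by lra.
    replace (- (t - s)) with (s - t) by ring. eapply unit_speed_cdist_le; eauto; lra.
Qed.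

Lemma sorted_head_le_last (l : list R) x d : Sorted Rle (x :: l) -> x <= last (x :: l) d.
Proof.
  revert x. induction l as [| y l IH]; intros x H; simpl; [lra |].
  apply Sorted_inv in H as [Hs Hr]. apply HdRel_inv in Hr. specialize (IH y Hs).
  destruct l; simpl in *; lra.
Qed.

Lemma last_cons_default (l : list R) x d d' : last (x :: l) d = last (x :: l) d'.
Proof.
  revert x. induction l as [| y l IH]; intros x; [reflexivity |].
  change (last (y :: l) d = last (y :: l) d'). apply IH.
Qed.

Lemma psum_telescope L g (D : R -> R) s t :
  (forall x y, s <= x <= t -> s <= y <= t -> cdist L (g x) (g y) = Rabs (D y - D x)) ->
  (forall x y z, s <= x -> x <= y -> y <= z -> z <= t ->
     Rabs (D z - D x) = Rabs (D y - D x) + Rabs (D z - D y)) ->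
  forall l x, s <= x <= t -> Sorted Rle (x :: l) -> last (x :: l) x = t ->
  psum L g x l = Rabs (D t - D x).
Proof.
  intros H1 H2. induction l as [| y l IH]; intros x Hx Hs Hl.
  - simpl in *. subst. rewrite Rminus_diag, Rabs_R0. reflexivity.
  - simpl psum. apply Sorted_inv in Hs as [Hs' Hrel]. apply HdRel_inv in Hrel.
    assert (Hl' : last (y :: l) y = t).
    { rewrite <- Hl. simpl. destruct l; auto. apply last_cons_default. }
    assert (Hy : y <= t) by (rewrite <- Hl'; now apply sorted_head_le_last).
    rewrite IH, H1 by (auto; lra). symmetry. apply H2; lra.
Qed.

Lemma lip1_continuity (f : R -> R) :
  (forall w w', Rabs (f w - f w') <= Rabs (w - w')) -> continuity f.
Proof.
  intros H x eps Heps. exists eps. split; auto. intros y [_ Hy].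
  simpl in *. unfold R_dist in *. eapply Rle_lt_trans; [apply H | auto].
Qed.

Definition clamp (s t w : R) : R := Rmax s (Rmin t w).

Lemma clamp_in s t w : s <= t -> s <= clamp s t w <= t.
Proof. intros. unfold clamp, Rmax, Rmin. repeat destruct Rle_dec; lra. Qed.

Lemma clamp_id s t w : s <= w <= t -> clamp s t w = w.
Proof. intros. unfold clamp, Rmax, Rmin. repeat destruct Rle_dec; lra. Qed.

Lemma clamp_lip1 s t w w' : s <= t -> Rabs (clamp s t w - clamp s t w') <= Rabs (w - w').
Proof. intros. unfold clamp, Rmax, Rmin. repeat destruct Rle_dec; case_Rabs. Qed.

(* Otherwise the value halfway between [D y] and [min (D x) (D z)] is taken on both sides
   of [y] (intermediate value theorem). *)
Lemma lip1_inj_no_dip (D : R -> R) s t x y z :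
  (forall x y, s <= x <= t -> s <= y <= t -> Rabs (D y - D x) <= Rabs (y - x)) ->
  (forall p q, s < p < t -> s < q < t -> D p = D q -> p = q) ->
  s <= x -> x <= y -> y <= z -> z <= t -> ~ (D y < D x /\ D y < D z).
Proof.
  intros D_lip1 D_inj Hsx Hxy Hyz Hzt [Hx Hz].
  assert (Hst : s <= t) by lra.
  set (E := fun w => D (clamp s t w)).
  assert (Ec : continuity E).
  { apply lip1_continuity. intros w w'. unfold E.
    eapply Rle_trans; [| apply (clamp_lip1 s t w w' Hst)].
    apply D_lip1; apply clamp_in; auto. }
  assert (EE : forall w, s <= w <= t -> E w = D w) by (intros; unfold E; now rewrite clamp_id).
  set (c := (Rmin (D x) (D z) + D y) / 2).
  assert (c < D x /\ c < D z /\ D y < c) by (unfold c, Rmin; destruct Rle_dec; lra).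
  destruct (IVT_gen E x y c Ec) as [p [Hp Hpc]];
    [rewrite !EE by lra; unfold Rmin, Rmax; destruct Rle_dec; lra |].
  destruct (IVT_gen E y z c Ec) as [q [Hq Hqc]];
    [rewrite !EE by lra; unfold Rmin, Rmax; destruct Rle_dec; lra |].
  rewrite Rmin_left, Rmax_right in Hp, Hq by lra.
  rewrite EE in Hpc, Hqc by lra.
  assert (x < p < y).
  { split; apply Rnot_ge_lt; intros ?; assert (p = x \/ p = y) as [-> | ->] by lra; lra. }
  assert (y < q < z).
  { split; apply Rnot_ge_lt; intros ?; assert (q = y \/ q = z) as [-> | ->] by lra; lra. }
  assert (p = q) by (apply D_inj; lra). lra.
Qed.

Lemma lip1_inj_between (D : R -> R) s t x y z :
  (forall x y, s <= x <= t -> s <= y <= t -> Rabs (D y - D x) <= Rabs (y - x)) ->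
  (forall p q, s < p < t -> s < q < t -> D p = D q -> p = q) ->
  s <= x -> x <= y -> y <= z -> z <= t ->
  Rabs (D z - D x) = Rabs (D y - D x) + Rabs (D z - D y).
Proof.
  intros D_lip1 D_inj Hsx Hxy Hyz Hzt.
  pose proof (lip1_inj_no_dip D s t x y z D_lip1 D_inj Hsx Hxy Hyz Hzt) as Hlow.
  pose proof (lip1_inj_no_dip (fun w => - D w) s t x y z) as Hhigh.
  assert (Hlip : forall u w, s <= u <= t -> s <= w <= t -> Rabs (- D w - - D u) <= Rabs (w - u)).
  { intros u w Hu Hw. rewrite <- Rabs_Ropp.
    replace (- (- D w - - D u)) with (D w - D u) by ring. auto. }
  assert (Hinj : forall p q, s < p < t -> s < q < t -> - D p = - D q -> p = q).
  { intros p q Hp Hq Hpq. apply D_inj; auto. lra. }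
  specialize (Hhigh Hlip Hinj Hsx Hxy Hyz Hzt).
  destruct (Rlt_dec (D y) (Rmin (D x) (D z))) as [Hy | Hy].
  { exfalso. apply Hlow. unfold Rmin in Hy; destruct Rle_dec; lra. }
  destruct (Rlt_dec (Rmax (D x) (D z)) (D y)) as [Hy' | Hy'].
  { exfalso. apply Hhigh. unfold Rmax in Hy'; destruct Rle_dec; lra. }
  unfold Rmin, Rmax in *; destruct Rle_dec; case_Rabs.
Qed.

(* On a short interval the centred lift [D] of [g] is injective and 1-Lipschitz, hence
   monotone, so inscribed polygons telescope to [|D t - D s| = cdist L (g s) (g t)]. *)
Lemma unit_speed_local_isometry L g a b s t : 0 < L -> unit_speed L g a b ->
  (forall p q, a < p < b -> a < q < b -> eqmod L (g p) (g q) -> p = q) ->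
  a <= s -> s <= t -> t <= b -> t - s <= L / 4 -> cdist L (g s) (g t) = t - s.
Proof.
  intros HL Hu Hinj Has Hst Htb Hsmall.
  set (D := fun x => cmod L (g x - g s)).
  assert (HD : forall x, eqmod L (g x - g s) (D x) /\ - (L / 2) <= D x < L / 2)
    by (intros x; apply cmod_spec; auto).
  assert (D_small : forall x, s <= x <= t -> Rabs (D x) <= x - s).
  { intros x Hx. destruct (HD x) as [E1 E2].
    rewrite <- (Rminus_0_r (D x)), <- (cdist_abs_small L) by (auto; rewrite Rminus_0_r; case_Rabs).
    rewrite (cdist_eqmod L (g x - g s) 0) by (auto using eqmod_refl).
    rewrite (cdist_diff L (g s) (g x) (g x - g s) 0 0%Z) by (auto; right; simpl; lra).
    eapply unit_speed_cdist_le; eauto; lra. }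
  assert (D_cdist : forall x y, s <= x <= t -> s <= y <= t ->
                    cdist L (g x) (g y) = Rabs (D y - D x)).
  { intros x y Hx Hy.
    destruct (HD x) as [[k1 E1] _]. destruct (HD y) as [[k2 E2] _].
    rewrite <- (cdist_diff L (g x) (g y) (D y) (D x) (k1 - k2)%Z)
      by (auto; right; rewrite minus_IZR; lra).
    apply cdist_abs_small; auto. pose proof (D_small x Hx). pose proof (D_small y Hy). case_Rabs. }
  assert (D_lip1 : forall x y, s <= x <= t -> s <= y <= t -> Rabs (D y - D x) <= Rabs (y - x)).
  { intros x y Hx Hy. rewrite <- D_cdist by auto. eapply unit_speed_cdist_le_abs; eauto; lra. }
  assert (D_inj : forall p q, s < p < t -> s < q < t -> D p = D q -> p = q).
  { intros p q Hp Hq Hpq. apply Hinj; try lra.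
    destruct (HD p) as [[k1 E1] _]. destruct (HD q) as [[k2 E2] _].
    exists (k1 - k2)%Z. rewrite minus_IZR. lra. }
  apply Rle_antisym; [eapply unit_speed_cdist_le; eauto |].
  destruct Hu as [_ Hu]. destruct (Hu s t Has Hst Htb) as [_ Happrox].
  apply Rnot_lt_le. intro Hlt.
  destruct (Happrox (t - s - cdist L (g s) (g t))) as [l [[Hl1 Hl2] Hl3]]; [lra |].
  rewrite (psum_telescope L g D s t D_cdist
             (fun x y z => lip1_inj_between D s t x y z D_lip1 D_inj) l s) in Hl3 by (auto; lra).
  rewrite <- D_cdist in Hl3 by lra. lra.
Qed.

Lemma unit_speed_local_linear L g a b s t : 0 < L -> unit_speed L g a b ->
  (forall p q, a < p < b -> a < q < b -> eqmod L (g p) (g q) -> p = q) ->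
  a <= s -> s <= t -> t <= b -> t - s <= L / 4 ->
  exists e, is_sign e /\ eqmod L (g t) (g s + e * (t - s)).
Proof.
  intros. destruct (cdist_displacement L (g s) (g t)) as [e [He He']]; auto.
  exists e. split; auto. now rewrite (unit_speed_local_isometry L g a b s t) in He'.
Qed.

Lemma local_signs_agree L g x y z e1 e2 e3 : 0 < L -> x < y -> y <= z -> z - x <= L / 4 ->
  is_sign e1 -> is_sign e2 -> is_sign e3 ->
  eqmod L (g y) (g x + e1 * (y - x)) -> eqmod L (g z) (g x + e2 * (z - x)) ->
  eqmod L (g z) (g y + e3 * (z - y)) -> e1 = e2.
Proof.
  intros HL H1 H2 H3 E1 E2 E3 [k1 K1] [k2 K2] [k3 K3].
  assert (Heq : e2 * (z - x) = e1 * (y - x) + e3 * (z - y)).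
  { apply eqmod_abs_lt with L; auto.
    - exists (k3 + k1 - k2)%Z. rewrite minus_IZR, plus_IZR. lra.
    - destruct E1, E2, E3; subst; case_Rabs. }
  destruct E1, E2, E3; subst; lra.
Qed.

Definition linear_on (L : R) (g : R -> R) (a y e : R) : Prop :=
  forall t, a <= t <= y -> eqmod L (g t) (g a + e * (t - a)).

Section InjectiveUnitSpeed.
Variables (L a b : R) (g : R -> R).
Hypothesis HL : 0 < L.
Hypothesis g_unit : unit_speed L g a b.
Hypothesis g_inj : forall p q, a < p < b -> a < q < b -> eqmod L (g p) (g q) -> p = q.

Lemma linear_on_start : a < b -> exists e, is_sign e /\ linear_on L g a (Rmin b (a + L / 8)) e.
Proof.
  intros Hab. set (t1 := Rmin b (a + L / 8)).
  assert (Ht1 : a < t1 <= b /\ t1 <= a + L / 8) by (unfold t1, Rmin; destruct Rle_dec; lra).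
  destruct (unit_speed_local_linear L g a b a t1) as [e [He G1]]; auto; try lra.
  exists e. split; auto. intros t Ht.
  destruct (Req_dec t a) as [-> | Hta]; [apply eqmod_eq; ring |].
  destruct (unit_speed_local_linear L g a b a t) as [e1 [He1 Ge1]]; auto; try lra.
  destruct (unit_speed_local_linear L g a b t t1) as [e3 [He3 Ge3]]; auto; try lra.
  now rewrite (local_signs_agree L g a t t1 e1 e e3) in Ge1 by (auto; lra).
Qed.

(* With [x = max a (y - L/8)], the local signs on [x, t] and on [x, y] agree, and the latter
   is [e]. *)
Lemma linear_on_extend y e : a < y -> y <= b -> is_sign e -> linear_on L g a y e ->
  linear_on L g a (Rmin b (y + L / 8)) e.
Proof.
  intros Hay Hyb He Hlin t Ht.
  destruct (Rle_dec t y) as [Hty | Hty]; [apply Hlin; lra |].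
  assert (Htb : y < t <= b /\ t <= y + L / 8) by (unfold Rmin in Ht; destruct Rle_dec; lra).
  set (x := Rmax a (y - L / 8)).
  assert (Hx : a <= x < y /\ y - x <= L / 8) by (unfold x, Rmax; destruct Rle_dec; lra).
  destruct (unit_speed_local_linear L g a b x y) as [e1 [He1 G1]]; auto; try lra.
  destruct (unit_speed_local_linear L g a b x t) as [e2 [He2 G2]]; auto; try lra.
  destruct (unit_speed_local_linear L g a b y t) as [e3 [He3 G3]]; auto; try lra.
  assert (e1 = e2) by (apply (local_signs_agree L g x y t e1 e2 e3); auto; lra). subst e2.
  assert (e1 = e).
  { destruct (Hlin x ltac:(lra)) as [k1 K1]. destruct (Hlin y ltac:(lra)) as [k2 K2].
    destruct G1 as [k3 K3].
    assert (Heq : e1 * (y - x) = e * (y - x)).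
    { apply eqmod_abs_lt with L; auto.
      - exists (k2 - k1 - k3)%Z. rewrite !minus_IZR. lra.
      - destruct He1, He; subst; case_Rabs. }
    destruct He1, He; subst; lra. }
  subst e1. eapply eqmod_trans; [exact G2 |].
  destruct (Hlin x ltac:(lra)) as [k K]. exists k. lra.
Qed.

Lemma injective_unit_speed_linear : a <= b -> exists e, is_sign e /\ linear_on L g a b e.
Proof.
  intros Hab. destruct (Req_dec a b) as [<- | Hne].
  { exists 1. split; [now left |]. intros t Ht. apply eqmod_eq. replace t with a; lra. }
  destruct (linear_on_start ltac:(lra)) as [e [He Hstart]].
  exists e. split; auto.
  assert (Hn : forall n, linear_on L g a (Rmin b (a + INR (S n) * (L / 8))) e).
  { induction n as [| n IH].
    - now replace (a + INR 1 * (L / 8)) with (a + L / 8) by (simpl; ring).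
    - unfold Rmin at 1 in IH. destruct Rle_dec as [Hb | Hb].
      + intros t Ht. apply IH. unfold Rmin in Ht |- *. destruct Rle_dec; lra.
      + replace (a + INR (S (S n)) * (L / 8)) with ((a + INR (S n) * (L / 8)) + L / 8)
          by (rewrite (S_INR (S n)); ring).
        apply linear_on_extend; auto; try lra.
        rewrite S_INR. pose proof (pos_INR n). nra. }
  destruct (INR_unbounded ((b - a) / (L / 8))) as [n Hbn].
  intros t Ht. apply (Hn n). split; [lra |].
  assert (b - a < INR n * (L / 8)).
  { apply Rmult_lt_compat_r with (r := L / 8) in Hbn; [| lra].
    now replace ((b - a) / (L / 8) * (L / 8)) with (b - a) in Hbn by (field; lra). }
  rewrite S_INR. unfold Rmin. destruct Rle_dec; lra.
Qed.

End InjectiveUnitSpeed.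

(** * Parametrising the complement of an arc *)

Definition off_arc (L l x : R) : Prop := ~ exists tau, 0 < tau < l /\ eqmod L x tau.

Lemma off_arc_eqmod L l x y : eqmod L x y -> off_arc L l x -> off_arc L l y.
Proof.
  intros H Hx [tau [Ht Hy]]. apply Hx. exists tau. split; auto. eapply eqmod_trans; eauto.
Qed.

Lemma off_arc_reflect L l x : off_arc L l x -> off_arc L l (l - x).
Proof.
  intros Hx [tau [Ht [k Hk]]]. apply Hx. exists (l - tau). split; [lra |].
  exists (- k)%Z. rewrite opp_IZR. lra.
Qed.

Lemma off_arc_end L l : 0 < l < L -> off_arc L l l.
Proof.
  intros Hl [tau [Ht Hm]].
  assert (l = tau) by (apply eqmod_abs_lt with L; auto; try lra; case_Rabs). lra.
Qed.

Lemma off_arc_param_normalized L l m W : 0 < L -> 0 < l <= L -> 0 <= m -> 0 <= W < L ->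
  (forall s, 0 <= s <= m -> off_arc L l (W + s)) ->
  (forall x, off_arc L l x -> exists s, 0 <= s <= m /\ eqmod L x (W + s)) ->
  (forall s t, 0 <= s <= m -> 0 <= t <= m -> eqmod L (W + s) (W + t) -> s = t) ->
  m = L - l /\ eqmod L W l.
Proof.
  intros HL Hl Hm HW H_off H_onto H_inj.
  assert (HmL : m < L).
  { apply Rnot_le_lt. intro.
    assert (0 = L) by (apply H_inj; try lra; exists (-1)%Z; simpl; lra). lra. }
  assert (HW0 : W = 0 \/ l <= W).
  { destruct (Rlt_dec W l) as [Hlt |]; [| right; lra].
    destruct (Req_dec W 0) as [| Hne]; [now left |].
    exfalso. apply (H_off 0); [lra |]. exists W. split; [lra |].
    rewrite Rplus_0_r. apply eqmod_refl. }
  destruct HW0 as [-> | HW0].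
  - assert (Hm0 : m = 0).
    { destruct (Req_dec m 0) as [| Hne]; auto. exfalso.
      set (s := Rmin m l / 2).
      assert (0 < s < l /\ s <= m) by (unfold s, Rmin; destruct Rle_dec; lra).
      apply (H_off s); [lra |]. exists s. split; [lra |]. rewrite Rplus_0_l. apply eqmod_refl. }
    subst m. destruct (Req_dec l L) as [-> | Hne].
    + split; [ring | exists (-1)%Z; simpl; ring].
    + exfalso. destruct (H_onto l (off_arc_end L l ltac:(lra))) as [s [Hs Hs']].
      assert (l = 0 + s) by (apply eqmod_abs_lt with L; auto; case_Rabs). lra.
  - assert (HWm : W + m <= L).
    { apply Rnot_lt_le. intro Hc. set (s := L - W + Rmin l (W + m - L) / 2).
      assert (Hs : 0 <= s <= m /\ 0 < W + s - L < l) by (unfold s, Rmin; destruct Rle_dec; lra).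
      apply (H_off s); [lra |]. exists (W + s - L). split; [lra |]. exists 1%Z. simpl. lra. }
    destruct (H_onto l (off_arc_end L l ltac:(lra))) as [sl [Hsl Hsl']].
    assert (l = W + sl) by (apply eqmod_abs_lt with L; auto; case_Rabs).
    assert (W = l) as -> by lra. split; [| apply eqmod_refl].
    apply Rle_antisym; [lra |]. apply Rnot_lt_le. intro Hc.
    set (x := (l + m + L) / 2).
    assert (Hx : off_arc L l x).
    { intros [tau [Ht Hm']].
      assert (x = tau) by (apply eqmod_abs_lt with L; auto; unfold x; case_Rabs).
      unfold x in *; lra. }
    destruct (H_onto x Hx) as [s [Hs Hs']].
    assert (x = l + s) by (apply eqmod_abs_lt with L; auto; unfold x; case_Rabs).
    unfold x in *; lra.
Qed.

Lemma off_arc_param_forward L l m W : 0 < L -> 0 < l <= L -> 0 <= m ->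
  (forall s, 0 <= s <= m -> off_arc L l (W + s)) ->
  (forall x, off_arc L l x -> exists s, 0 <= s <= m /\ eqmod L x (W + s)) ->
  (forall s t, 0 <= s <= m -> 0 <= t <= m -> eqmod L (W + s) (W + t) -> s = t) ->
  m = L - l /\ eqmod L W l.
Proof.
  intros HL Hl Hm H_off H_onto H_inj.
  destruct (eqmod_repr L W HL) as [W0 [k [HWk HW0]]].
  assert (E : forall s, eqmod L (W + s) (W0 + s)) by (intros s; exists k; lra).
  destruct (off_arc_param_normalized L l m W0 HL Hl Hm HW0) as [Hml HW0l].
  - intros s Hs. eapply off_arc_eqmod; [apply E | auto].
  - intros x Hx. destruct (H_onto x Hx) as [s [Hs Hs']]. exists s. split; auto.
    eapply eqmod_trans; [exact Hs' | apply E].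
  - intros s t Hs Ht Hst. apply H_inj; auto.
    eapply eqmod_trans; [apply E |]. eapply eqmod_trans; [exact Hst | apply eqmod_sym, E].
  - split; auto. eapply eqmod_trans; [| exact HW0l]. exists k. lra.
Qed.

(* In either direction, the parametrisation passes its midpoint at the midpoint of the
   arc [l, L]. *)
Lemma off_arc_param L l m W z : 0 < L -> 0 < l <= L -> 0 <= m -> is_sign z ->
  (forall s, 0 <= s <= m -> off_arc L l (W + z * s)) ->
  (forall x, off_arc L l x -> exists s, 0 <= s <= m /\ eqmod L x (W + z * s)) ->
  (forall s t, 0 <= s <= m -> 0 <= t <= m -> eqmod L (W + z * s) (W + z * t) -> s = t) ->
  m = L - l /\ eqmod L (W + z * (m / 2)) ((l + L) / 2).
Proof.
  intros HL Hl Hm [-> | ->] H_off H_onto H_inj.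
  - destruct (off_arc_param_forward L l m W HL Hl Hm) as [Hml [k Hk]].
    + intros s Hs. rewrite <- (Rmult_1_l s). auto.
    + intros x Hx. destruct (H_onto x Hx) as [s Hs]. rewrite Rmult_1_l in Hs. eauto.
    + intros s t Hs Ht Hst. apply H_inj; auto. now rewrite !Rmult_1_l.
    + split; auto. exists k. lra.
  - destruct (off_arc_param_forward L l m (l - W) HL Hl Hm) as [Hml [k Hk]].
    + intros s Hs. replace (l - W + s) with (l - (W + -1 * s)) by ring.
      apply off_arc_reflect. auto.
    + intros x Hx. destruct (H_onto (l - x) (off_arc_reflect _ _ _ Hx)) as [s [Hs [k Hk]]].
      exists s. split; auto. exists (- k)%Z. rewrite opp_IZR. lra.
    + intros s t Hs Ht [k Hk]. apply H_inj; auto. exists (- k)%Z. rewrite opp_IZR. lra.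
    + split; auto. exists (- k - 1)%Z. rewrite minus_IZR, opp_IZR. lra.
Qed.

Lemma eqmod_sign_coord L e u x y : is_sign e ->
  eqmod L x (u + e * y) <-> eqmod L (e * (x - u)) y.
Proof.
  intros He. pose proof (is_sign_sq e He) as Hee. split; intros H.
  - apply (eqmod_sign_mul L e) in H; auto. apply (eqmod_addr L (- e * u)) in H.
    apply eqmod_trans with (e * x + - e * u); [apply eqmod_eq; ring |].
    apply eqmod_trans with (e * (u + e * y) + - e * u); [exact H | apply eqmod_eq].
    replace (e * (u + e * y) + - e * u) with ((e * e) * y) by ring. rewrite Hee. ring.
  - apply (eqmod_sign_mul L e) in H; auto. apply (eqmod_addr L u) in H.
    apply eqmod_trans with (e * (e * (x - u)) + u).
    { apply eqmod_eq. replace (e * (e * (x - u)) + u) with ((e * e) * (x - u) + u) by ring.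
      rewrite Hee. ring. }
    apply eqmod_trans with (e * y + u); [exact H | apply eqmod_eq; ring].
Qed.

Lemma complement_off_arc L a b (g : R -> R) u e x : is_sign e ->
  (forall t, a <= t <= b -> eqmod L (g t) (u + e * (t - a))) ->
  (~ exists t, a < t < b /\ eqmod L x (g t)) <-> off_arc L (b - a) (e * (x - u)).
Proof.
  intros He Hg. unfold off_arc. split; intros H [tau [Ht Hx]]; apply H.
  - exists (a + tau). split; [lra |].
    eapply eqmod_trans; [| apply eqmod_sym, Hg; lra].
    apply (eqmod_sign_coord L e u); auto. now replace (a + tau - a) with tau by ring.
  - exists (tau - a). split; [lra |]. apply (eqmod_sign_coord L e u); auto.
    eapply eqmod_trans; [exact Hx | apply Hg; lra].
Qed.

(* In the coordinate [e * (x - u)] the arc is [(0, b - a)], and [c] is linear since it is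
   an injective unit-speed path. *)
Lemma complement_param_linear L a b (g : R -> R) u e (Q : R -> Prop) c m :
  0 < L -> a < b -> b - a <= L -> is_sign e ->
  (forall t, a <= t <= b -> eqmod L (g t) (u + e * (t - a))) ->
  (forall x, Q x <-> ~ exists t, a < t < b /\ eqmod L x (g t)) ->
  segment_param L Q c m ->
  m = L - (b - a) /\ exists z, is_sign z /\
    forall s, 0 <= s <= m -> eqmod L (c s) (u + e * ((b - a + L) / 2 + z * (s - m / 2))).
Proof.
  intros HL Hab Hl He Hg HQ [Hm [Hu [Hinj HQc]]].
  assert (Hee : e * e = 1) by (apply is_sign_sq; auto).
  assert (Qc : forall x, Q x <-> off_arc L (b - a) (e * (x - u)))
    by (intros x; rewrite HQ; apply complement_off_arc; auto).
  destruct (injective_unit_speed_linear L 0 m c HL Hu) as [eta [Heta Hc]]; auto.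
  { intros p q Hp Hq. apply Hinj; lra. }
  set (W := e * (c 0 - u)). set (z := e * eta).
  assert (Hcoord : forall s, 0 <= s <= m -> eqmod L (e * (c s - u)) (W + z * s)).
  { intros s Hs. apply (eqmod_sign_coord L e u); auto.
    eapply eqmod_trans; [apply Hc; auto | apply eqmod_eq]. unfold W, z.
    replace (u + e * (e * (c 0 - u) + e * eta * s)) with ((e * e) * (c 0 - u + eta * s) + u)
      by ring.
    rewrite Hee. ring. }
  assert (Hz : is_sign z) by (apply is_sign_mul; auto).
  assert (H_off : forall s, 0 <= s <= m -> off_arc L (b - a) (W + z * s)).
  { intros s Hs. eapply off_arc_eqmod; [apply Hcoord; auto |].
    apply Qc, HQc. exists s. split; auto. apply eqmod_refl. }
  assert (H_onto : forall y, off_arc L (b - a) y -> exists s, 0 <= s <= m /\ eqmod L y (W + z * s)).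
  { intros y Hy. destruct (proj1 (HQc (u + e * y))) as [s [Hs Hys]].
    { apply Qc. replace (e * (u + e * y - u)) with ((e * e) * y) by ring.
      now rewrite Hee, Rmult_1_l. }
    exists s. split; auto. eapply eqmod_trans; [| apply Hcoord; auto].
    apply eqmod_sym. apply (eqmod_sign_coord L e u); auto. now apply eqmod_sym. }
  assert (H_inj : forall s t, 0 <= s <= m -> 0 <= t <= m ->
                  eqmod L (W + z * s) (W + z * t) -> s = t).
  { intros s t Hs Ht Hst. apply Hinj; auto.
    apply eqmod_trans with (u + e * (e * (c t - u))).
    - apply (eqmod_sign_coord L e u); auto.
      eapply eqmod_trans; [apply Hcoord; auto |]. eapply eqmod_trans; [exact Hst |].
      apply eqmod_sym, Hcoord; auto.
    - apply eqmod_eq. replace (u + e * (e * (c t - u))) with ((e * e) * (c t - u) + u) by ring.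
      rewrite Hee. ring. }
  destruct (off_arc_param L (b - a) m W z HL ltac:(lra) Hm Hz H_off H_onto H_inj)
    as [Hml Hmid].
  split; auto. exists z. split; auto. intros s Hs. apply (eqmod_sign_coord L e u); auto.
  eapply eqmod_trans; [apply Hcoord; auto |].
  replace (W + z * s) with ((W + z * (m / 2)) + z * (s - m / 2)) by ring.
  now apply eqmod_addr.
Qed.

(** * The lift of one tightening step *)

Definition nondecr_lip1 (g : R -> R) : Prop := forall x x', x <= x' -> 0 <= g x' - g x <= x' - x.

Lemma nondecr_lip1_abs g x y : nondecr_lip1 g -> Rabs (g x - g y) <= Rabs (x - y).
Proof.
  intros Hg. destruct (Rle_dec x y) as [Hxy | Hxy].
  - pose proof (Hg x y Hxy). rewrite (Rabs_left1 (x - y)) by lra. case_Rabs.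
  - pose proof (Hg y x ltac:(lra)). rewrite (Rabs_pos_eq (x - y)) by lra. case_Rabs.
Qed.

(* [qlength L l tau] is the length of the part of [0, tau] lying over the arc [l, L]
   modulo [L] (negated when [tau < 0]); it is the maximum over [k] of
   [qlength_upto L l k tau], attained at the period [k] containing [tau - l]. *)
Definition qlength_upto (L l : R) (k : Z) (tau : R) : R :=
  IZR k * (L - l) + Rmin (tau - l - IZR k * L) (L - l).

Definition qlength (L l tau : R) : R := qlength_upto L l (Int_part ((tau - l) / L)) tau.

(* Identity over the arc [0, l], slope [kap] over the arc [l, L]. *)
Definition step_lift (L l kap tau : R) : R := tau - (1 - kap) * qlength L l tau.

Section StepLift.
Variables L l : R.
Hypothesis Hl : 0 < l < L.

Lemma qlength_upto_le k tau : qlength_upto L l k tau <= qlength L l tau.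
Proof.
  unfold qlength. set (J := Int_part ((tau - l) / L)).
  pose proof (floor_mul_bounds L (tau - l) ltac:(lra)) as HJ. fold J in HJ.
  unfold qlength_upto. destruct (Z.lt_trichotomy k J) as [Hk | [-> | Hk]]; [| lra |].
  - assert (Hk' : (k + 1 <= J)%Z) by lia. apply IZR_le in Hk'. rewrite plus_IZR in Hk'.
    assert ((IZR k + 1) * (L - l) <= IZR J * (L - l)) by (apply Rmult_le_compat_r; lra).
    unfold Rmin; repeat destruct Rle_dec; nra.
  - assert (Hk' : (J + 1 <= k)%Z) by lia. apply IZR_le in Hk'. rewrite plus_IZR in Hk'.
    assert ((IZR J + 1) * l <= IZR k * l) by (apply Rmult_le_compat_r; lra).
    unfold Rmin; repeat destruct Rle_dec; nra.
Qed.

Lemma qlength_upto_lip1 k : nondecr_lip1 (qlength_upto L l k).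
Proof. intros tau tau' H. unfold qlength_upto, Rmin. repeat destruct Rle_dec; lra. Qed.

Lemma qlength_lip1 : nondecr_lip1 (qlength L l).
Proof.
  intros tau tau' H. split.
  - pose proof (qlength_upto_le (Int_part ((tau - l) / L)) tau').
    pose proof (qlength_upto_lip1 (Int_part ((tau - l) / L)) tau tau' H).
    unfold qlength at 2. lra.
  - pose proof (qlength_upto_le (Int_part ((tau' - l) / L)) tau).
    pose proof (qlength_upto_lip1 (Int_part ((tau' - l) / L)) tau tau' H).
    unfold qlength at 1. lra.
Qed.

Lemma qlength_upto_shift k j tau :
  qlength_upto L l (k + j) (tau + IZR j * L) = qlength_upto L l k tau + IZR j * (L - l).
Proof.
  unfold qlength_upto. rewrite plus_IZR.
  replace (tau + IZR j * L - l - (IZR k + IZR j) * L) with (tau - l - IZR k * L) by ring. ring.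
Qed.

Lemma qlength_shift j tau : qlength L l (tau + IZR j * L) = qlength L l tau + IZR j * (L - l).
Proof.
  apply Rle_antisym.
  - unfold qlength at 1. set (J := Int_part ((tau + IZR j * L - l) / L)).
    replace J with ((J - j) + j)%Z by lia. rewrite qlength_upto_shift.
    pose proof (qlength_upto_le (J - j) tau). lra.
  - pose proof (qlength_upto_le (Int_part ((tau - l) / L) + j) (tau + IZR j * L)) as H.
    rewrite qlength_upto_shift in H. unfold qlength at 1. lra.
Qed.

Lemma qlength_le_period tau : 0 <= tau <= L ->
  qlength L l tau <= Rmax 0 (tau - l).
Proof.
  intros H. unfold qlength. set (k := Int_part ((tau - l) / L)). unfold qlength_upto.
  destruct (Z.lt_ge_cases k 0) as [Hk | Hk].
  - assert (Hk' : (k + 1 <= 0)%Z) by lia. apply IZR_le in Hk'. rewrite plus_IZR in Hk'.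
    assert ((IZR k + 1) * (L - l) <= 0) by nra.
    unfold Rmin, Rmax; repeat destruct Rle_dec; lra.
  - apply IZR_le in Hk. assert (0 <= IZR k * l) by nra.
    unfold Rmin, Rmax; repeat destruct Rle_dec; nra.
Qed.

Lemma qlength_low tau : 0 <= tau <= l -> qlength L l tau = 0.
Proof.
  intros H. apply Rle_antisym.
  - pose proof (qlength_le_period tau ltac:(lra)). unfold Rmax in *; destruct Rle_dec; lra.
  - pose proof (qlength_upto_le (-1)%Z tau) as H0. unfold qlength_upto in H0. simpl in H0.
    unfold Rmin in H0; destruct Rle_dec; lra.
Qed.

Lemma qlength_high tau : l <= tau <= L -> qlength L l tau = tau - l.
Proof.
  intros H. apply Rle_antisym.
  - pose proof (qlength_le_period tau ltac:(lra)). unfold Rmax in *; destruct Rle_dec; lra.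
  - pose proof (qlength_upto_le 0%Z tau) as H0. unfold qlength_upto in H0. simpl in H0.
    unfold Rmin in H0; destruct Rle_dec; lra.
Qed.

Variable kap : R.
Hypothesis Hkap : 0 <= kap <= 1.

Lemma step_lift_lip1 : nondecr_lip1 (step_lift L l kap).
Proof.
  intros tau tau' H. pose proof (qlength_lip1 tau tau' H). unfold step_lift.
  assert (0 <= (1 - kap) * (qlength L l tau' - qlength L l tau) <= tau' - tau) by (split; nra).
  lra.
Qed.

Lemma step_lift_shift j tau : step_lift L l kap (tau + IZR j * L) =
  step_lift L l kap tau + IZR j * (L - (1 - kap) * (L - l)).
Proof. unfold step_lift. rewrite qlength_shift. ring. Qed.

Lemma step_lift_low tau : 0 <= tau <= l -> step_lift L l kap tau = tau.
Proof. intros. unfold step_lift. rewrite qlength_low; auto. ring. Qed.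

Lemma step_lift_high tau : l <= tau <= L -> step_lift L l kap tau = l + kap * (tau - l).
Proof. intros. unfold step_lift. rewrite qlength_high; auto. ring. Qed.

End StepLift.

(* [g] lifts the map [p] between circles of lengths [L] and [L'], up to the reflection [s]
   and the rotation [r]. *)
Definition circle_lift (L L' : R) (p : R -> R) (s r : R) (g : R -> R) : Prop :=
  is_sign s /\ nondecr_lip1 g /\ (forall y, g (y + L) = g y + L') /\
  forall y, eqmod L' (p y) (s * g y + r).

Lemma step_lift_circle_lift Li Li' l kap u v e e' (p : R -> R) :
  0 < l < Li -> 0 <= kap <= 1 -> Li' = Li - (1 - kap) * (Li - l) -> is_sign e -> is_sign e' ->
  (forall x y, eqmod Li x y -> eqmod Li' (p x) (p y)) ->
  (forall tau, 0 <= tau <= Li -> eqmod Li' (p (u + e * tau)) (v + e' * step_lift Li l kap tau)) ->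
  circle_lift Li Li' p (e * e') v (fun y => e * step_lift Li l kap (e * (y - u))).
Proof.
  intros Hl Hkap HLi' He He' p_wd p_dom.
  set (G := step_lift Li l kap).
  assert (Hee : e * e = 1) by (apply is_sign_sq; auto).
  assert (G_shift : forall j tau, G (tau + IZR j * Li) = G tau + IZR j * Li').
  { intros j tau. unfold G. rewrite step_lift_shift by auto. now rewrite HLi'. }
  assert (p_all : forall tau, eqmod Li' (p (u + e * tau)) (v + e' * G tau)).
  { intros tau. destruct (eqmod_repr Li tau ltac:(lra)) as [t0 [k [-> Ht0]]].
    eapply eqmod_trans; [apply p_wd | eapply eqmod_trans; [apply (p_dom t0); lra |]].
    - replace (u + e * (t0 + IZR k * Li)) with (u + e * t0 + IZR k * (e * Li)) by ring.
      now apply eqmod_addZ_sign.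
    - rewrite G_shift. apply eqmod_sym.
      replace (v + e' * (G t0 + IZR k * Li')) with (v + e' * G t0 + IZR k * (e' * Li')) by ring.
      now apply eqmod_addZ_sign. }
  split; [apply is_sign_mul; auto | split; [| split]].
  - intros y y' Hy. destruct He as [-> | ->].
    + pose proof (step_lift_lip1 Li l Hl kap Hkap (1 * (y - u)) (1 * (y' - u)) ltac:(lra)).
      fold G in H. lra.
    + pose proof (step_lift_lip1 Li l Hl kap Hkap (-1 * (y' - u)) (-1 * (y - u)) ltac:(lra)).
      fold G in H. lra.
  - intros y. fold G. destruct He as [-> | ->].
    + replace (1 * (y + Li - u)) with (1 * (y - u) + IZR 1 * Li) by ring.
      rewrite G_shift. ring.
    + replace (-1 * (y + Li - u)) with (-1 * (y - u) + IZR (-1) * Li) by ring.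
      rewrite G_shift. ring.
  - intros y. fold G.
    eapply eqmod_trans; [apply p_wd | eapply eqmod_trans; [apply (p_all (e * (y - u))) |]].
    + apply eqmod_eq. replace (u + e * (e * (y - u))) with ((e * e) * (y - u) + u) by ring.
      rewrite Hee. ring.
    + apply eqmod_eq. replace (e * e' * (e * G (e * (y - u))) + v)
        with ((e * e) * e' * G (e * (y - u)) + v) by ring.
      rewrite Hee. ring.
Qed.

Lemma rescale_in_range s m mb : 0 < m -> 0 <= mb -> 0 <= s <= m -> 0 <= s * mb / m <= mb.
Proof.
  intros Hm Hmb Hs.
  split; [apply Rmult_le_pos; [apply Rmult_le_pos | apply Rlt_le, Rinv_0_lt_compat]; lra |].
  apply Rmult_le_reg_r with m; [lra |]. field_simplify; [| lra].
  assert (s * mb <= m * mb) by (apply Rmult_le_compat_r; lra). lra.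
Qed.

(* The parametrisations [c] of [Q] and [cb] of [Qbar] run in the same direction
   (unless [Qbar] is a point), because [p] maps the starting point of [c] to that of [cb]. *)
Lemma complement_params_agree Li Li' l m mb u v e e' z zb (p c cb : R -> R) :
  0 < l -> l < Li -> l <= Li' -> m = Li - l -> mb = Li' - l ->
  is_sign e -> is_sign e' -> is_sign z -> is_sign zb ->
  (forall x y, eqmod Li x y -> eqmod Li' (p x) (p y)) ->
  eqmod Li' (p u) v -> eqmod Li' (p (u + e * l)) (v + e' * l) ->
  (forall s, 0 <= s <= m -> eqmod Li (c s) (u + e * ((l + Li) / 2 + z * (s - m / 2)))) ->
  (forall s, 0 <= s <= mb -> eqmod Li' (cb s) (v + e' * ((l + Li') / 2 + zb * (s - mb / 2)))) ->
  (forall s, 0 <= s <= m -> eqmod Li' (p (c s)) (cb (s * mb / m))) ->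
  mb = 0 \/ z = zb.
Proof.
  intros Hl HlLi HlLi' Hm Hmb He He' Hz Hzb p_wd p_u p_ul Hc Hcb Hccb.
  assert (p_c0 : eqmod Li' (p (c 0)) (v + e' * ((l + Li') / 2 - z * (mb / 2)))).
  { eapply eqmod_trans; [apply p_wd, Hc; lra |]. subst m mb. destruct Hz as [-> | ->].
    - eapply eqmod_trans; [| eapply eqmod_trans; [exact p_ul | apply eqmod_eq; field]].
      apply p_wd, eqmod_eq. field.
    - eapply eqmod_trans; [apply p_wd | eapply eqmod_trans; [exact p_u |]].
      + replace (u + e * ((l + Li) / 2 + -1 * (0 - (Li - l) / 2))) with (u + IZR 1 * (e * Li))
          by (simpl; field).
        now apply eqmod_addZ_sign.
      + replace (v + e' * ((l + Li') / 2 - -1 * ((Li' - l) / 2))) with (v + IZR 1 * (e' * Li'))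
          by (simpl; field).
        apply eqmod_sym. now apply eqmod_addZ_sign. }
  assert (cb_0 : eqmod Li' (p (c 0)) (v + e' * ((l + Li') / 2 - zb * (mb / 2)))).
  { eapply eqmod_trans; [apply Hccb; lra |].
    replace (0 * mb / m) with 0 by (field; lra).
    eapply eqmod_trans; [apply Hcb; lra | apply eqmod_eq; ring]. }
  destruct (Req_dec mb 0) as [| Hmb0]; [now left | right].
  destruct (Req_dec z zb) as [| Hne]; auto. exfalso.
  assert (Hdiff : e' * (zb - z) * (mb / 2) = 0).
  { apply eqmod_abs_lt with Li'; [lra | |].
    - destruct (eqmod_trans _ _ _ _ (eqmod_sym _ _ _ p_c0) cb_0) as [k Hk].
      exists k. rewrite <- Hk. ring.
    - destruct He', Hz, Hzb; subst; case_Rabs. }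
  destruct He', Hz, Hzb; subst; lra.
Qed.

Lemma complement_map_affine Li Li' l m mb u v e e' z zb (p c cb : R -> R) :
  0 < l -> l < Li -> l <= Li' -> m = Li - l -> mb = Li' - l ->
  is_sign e -> is_sign e' -> is_sign z -> is_sign zb ->
  (forall x y, eqmod Li x y -> eqmod Li' (p x) (p y)) ->
  eqmod Li' (p u) v -> eqmod Li' (p (u + e * l)) (v + e' * l) ->
  (forall s, 0 <= s <= m -> eqmod Li (c s) (u + e * ((l + Li) / 2 + z * (s - m / 2)))) ->
  (forall s, 0 <= s <= mb -> eqmod Li' (cb s) (v + e' * ((l + Li') / 2 + zb * (s - mb / 2)))) ->
  (forall s, 0 <= s <= m -> eqmod Li' (p (c s)) (cb (s * mb / m))) ->
  forall tau, l <= tau <= Li -> eqmod Li' (p (u + e * tau)) (v + e' * (l + mb / m * (tau - l))).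
Proof.
  intros Hl HlLi HlLi' Hm Hmb He He' Hz Hzb p_wd p_u p_ul Hc Hcb Hccb.
  assert (orient : mb = 0 \/ z = zb)
    by (apply (complement_params_agree Li Li' l m mb u v e e' z zb p c cb); auto).
  intros tau Htau.
  set (s := m / 2 + z * (tau - (l + Li) / 2)).
  assert (Hs : 0 <= s <= m) by (unfold s; destruct Hz as [-> | ->]; lra).
  assert (Hsb : 0 <= s * mb / m <= mb) by (apply rescale_in_range; lra).
  eapply eqmod_trans; [apply p_wd | eapply eqmod_trans; [apply (Hccb s Hs) |]].
  - eapply eqmod_trans; [| apply eqmod_sym, Hc; auto]. apply eqmod_eq. unfold s.
    destruct Hz as [-> | ->]; ring.
  - eapply eqmod_trans; [apply Hcb; auto | apply eqmod_eq]. unfold s. subst m.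
    destruct orient as [Hmb0 | <-].
    + rewrite Hmb0. assert (Li' = l) as -> by lra. field. lra.
    + assert (Hzz : z * z = 1) by (apply is_sign_sq; auto). rewrite Hmb.
      replace (z * (((Li - l) / 2 + z * (tau - (l + Li) / 2)) * (Li' - l) / (Li - l)
                   - (Li' - l) / 2))
        with ((z * z) * (tau - (l + Li) / 2) * (Li' - l) / (Li - l)) by (field; lra).
      rewrite Hzz. field. lra.
Qed.

Lemma linear_inj_length_lt L g a b e : 0 < L -> a <= b -> is_sign e -> linear_on L g a b e ->
  (forall s t, a <= s <= b -> a <= t <= b -> eqmod L (g s) (g t) -> s = t) -> b - a < L.
Proof.
  intros HL Hab He Hlin Hinj. apply Rnot_le_lt. intro Hba.
  assert (a + L = a); [| lra].
  apply Hinj; try lra. eapply eqmod_trans; [apply Hlin; lra |].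
  replace (g a + e * (a + L - a)) with (g a + IZR 1 * (e * L)) by (simpl; ring).
  now apply eqmod_addZ_sign.
Qed.

Lemma linear_open_inj_length_le L g a b e : 0 < L -> is_sign e -> linear_on L g a b e ->
  (forall s t, a < s < b -> a < t < b -> eqmod L (g s) (g t) -> s = t) -> b - a <= L.
Proof.
  intros HL He Hlin Hinj. apply Rnot_lt_le. intro Hba. set (d := (b - a - L) / 2).
  assert (a + d = a + d + L); [| lra].
  apply Hinj; [unfold d; lra | unfold d; lra |].
  eapply eqmod_trans; [apply Hlin; unfold d; lra |
                      eapply eqmod_trans; [| apply eqmod_sym, Hlin; unfold d; lra]].
  replace (g a + e * (a + d + L - a)) with (g a + e * (a + d - a) + IZR 1 * (e * L))
    by (simpl; ring).
  apply eqmod_sym. now apply eqmod_addZ_sign.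
Qed.

Section TighteningStep.
Variables (Li Li' a b : R) (iota phi : R -> R) (Qi : R -> Prop).
Hypothesis HLi : 0 < Li.
Hypothesis HLi' : 0 < Li'.
Hypothesis HLi'_le : Li' <= Li.
Hypothesis Hab : a < b.
Hypothesis iota_unit : unit_speed Li iota a b.
Hypothesis iota_inj :
  forall s t, a <= s <= b -> a <= t <= b -> eqmod Li (iota s) (iota t) -> s = t.
Hypothesis phi_unit : unit_speed Li' phi a b.
Hypothesis phi_inj :
  forall s t, a < s < b -> a < t < b -> eqmod Li' (phi s) (phi t) -> s = t.
Hypothesis HQi : forall x, Qi x <-> ~ exists t, a < t < b /\ eqmod Li x (iota t).

Lemma iota_linear : exists e, is_sign e /\ linear_on Li iota a b e.
Proof.
  apply injective_unit_speed_linear; auto; [| lra].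
  intros s t Hs Ht. apply iota_inj; lra.
Qed.

Lemma phi_linear : exists e, is_sign e /\ linear_on Li' phi a b e.
Proof. apply injective_unit_speed_linear; auto. lra. Qed.

Lemma tightening_step_length_drop c q : segment_param Li Qi c q -> Li - Li' <= q.
Proof.
  intros Sc. destruct iota_linear as [e [He Hio]]. destruct phi_linear as [e' [He' Hph]].
  pose proof (linear_open_inj_length_le Li' phi a b e' HLi' He' Hph phi_inj).
  pose proof (linear_inj_length_lt Li iota a b e HLi ltac:(lra) He Hio iota_inj).
  destruct (complement_param_linear Li a b iota (iota a) e Qi c q) as [-> _]; auto; lra.
Qed.

Lemma tightening_step_lift (p c cb : R -> R) m mb (Qb : R -> Prop) :
  (forall x y, eqmod Li x y -> eqmod Li' (p x) (p y)) ->
  (forall t, a <= t <= b -> eqmod Li' (p (iota t)) (phi t)) ->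
  (forall y, Qb y <-> ~ exists t, a < t < b /\ eqmod Li' y (phi t)) ->
  0 < m -> segment_param Li Qi c m -> segment_param Li' Qb cb mb ->
  (forall s, 0 <= s <= m -> eqmod Li' (p (c s)) (cb (s * mb / m))) ->
  exists s r g, circle_lift Li Li' p s r g.
Proof.
  intros p_wd p_iota HQb Hm Sc Scb Hccb.
  destruct iota_linear as [e [He Hio]]. destruct phi_linear as [e' [He' Hph]].
  pose proof (linear_open_inj_length_le Li' phi a b e' HLi' He' Hph phi_inj) as HlLi'.
  pose proof (linear_inj_length_lt Li iota a b e HLi ltac:(lra) He Hio iota_inj) as HlLi.
  destruct (complement_param_linear Li a b iota (iota a) e Qi c m) as [Em [z [Hz Hc]]];
    auto; try lra.
  destruct (complement_param_linear Li' a b phi (phi a) e' Qb cb mb) as [Emb [zb [Hzb Hcb]]];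
    auto.
  set (kap := mb / m).
  assert (Hkap : 0 <= kap <= 1).
  { destruct Scb as [Hmb _]. unfold kap. split; [apply Rdiv_le_0_compat; lra |].
    apply Rmult_le_reg_r with m; auto. field_simplify; lra. }
  assert (p_iota_lin : forall tau, 0 <= tau <= b - a ->
                       eqmod Li' (p (iota a + e * tau)) (phi a + e' * tau)).
  { intros tau Htau.
    eapply eqmod_trans; [apply p_wd, eqmod_sym |
                         eapply eqmod_trans; [apply (p_iota (a + tau)); lra |]].
    - eapply eqmod_trans; [apply Hio; lra | apply eqmod_eq; ring].
    - eapply eqmod_trans; [apply Hph; lra | apply eqmod_eq; ring]. }
  exists (e * e'), (phi a), (fun y => e * step_lift Li (b - a) kap (e * (y - iota a))).
  apply step_lift_circle_lift; auto; [lra | unfold kap; rewrite Em, Emb; field; lra |].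
  intros tau Htau. destruct (Rle_dec tau (b - a)) as [Hlow | Hhigh].
  - rewrite step_lift_low by lra. apply p_iota_lin; lra.
  - rewrite step_lift_high by lra. unfold kap.
    apply (complement_map_affine Li Li' (b - a) m mb (iota a) (phi a) e e' z zb p c cb);
      auto; try lra.
    + pose proof (p_iota_lin 0 ltac:(lra)) as H0. now rewrite !Rmult_0_r, !Rplus_0_r in H0.
    + apply p_iota_lin; lra.
Qed.

End TighteningStep.

(** * Composing the lifts *)

Definition recentre (s r : R) (g : R -> R) (y : R) : R := s * (g (s * y + r) - g r).

Lemma recentre_spec s r g L L' :
  is_sign s -> nondecr_lip1 g -> (forall y, g (y + L) = g y + L') ->
  recentre s r g 0 = 0 /\ nondecr_lip1 (recentre s r g) /\ recentre s r g L = L'.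
Proof.
  intros Hs Hg Hper. unfold recentre. split; [| split].
  - rewrite Rmult_0_r, Rplus_0_l. ring.
  - intros x x' Hx. destruct Hs as [-> | ->].
    + specialize (Hg (1 * x + r) (1 * x' + r) ltac:(lra)). lra.
    + specialize (Hg (-1 * x' + r) (-1 * x + r) ltac:(lra)). lra.
  - destruct Hs as [-> | ->].
    + replace (1 * L + r) with (r + L) by ring. rewrite Hper. ring.
    + specialize (Hper (-1 * L + r)). replace (-1 * L + r + L) with r in Hper by ring.
      rewrite Hper. ring.
Qed.

Lemma nondecr_lip1_toward0 (h : R -> R) y : nondecr_lip1 h -> h 0 = 0 ->
  (0 <= y -> 0 <= h y <= y) /\ (y <= 0 -> y <= h y <= 0).
Proof.
  intros Hh H0. split; intros Hy.
  - pose proof (Hh 0 y Hy). lra.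
  - pose proof (Hh y 0 Hy). lra.
Qed.

Section LiftComposition.
Variables (L : nat -> R) (pi : nat -> R -> R) (SG RHO : nat -> R) (GG : nat -> R -> R).
Hypothesis pi_wd : forall i x y, eqmod (L i) x y -> eqmod (L (S i)) (pi i x) (pi i y).
Hypothesis pi_lift : forall i, circle_lift (L i) (L (S i)) (pi i) (SG i) (RHO i) (GG i).

(* Lifts of [picomp pi n] normalised to fix [0]; see lift_map_spec. *)
Fixpoint lift_sign (n : nat) : R :=
  match n with O => 1 | S i => SG i * lift_sign i end.

Fixpoint lift_shift (n : nat) : R :=
  match n with O => 0 | S i => SG i * GG i (lift_shift i) + RHO i end.

Fixpoint lift_map (n : nat) (x : R) : R :=
  match n with O => x | S i => recentre (lift_sign i) (lift_shift i) (GG i) (lift_map i x) end.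

Lemma lift_map_spec n :
  is_sign (lift_sign n) /\ lift_map n 0 = 0 /\ nondecr_lip1 (lift_map n) /\
  lift_map n (L O) = L n /\
  forall x, eqmod (L n) (picomp pi n x) (lift_sign n * lift_map n x + lift_shift n).
Proof.
  induction n as [| n [Hs [F0 [Fm [FL Fe]]]]]; simpl.
  - split; [now left |]. split; [reflexivity |]. split; [intros x x' H; lra |].
    split; [reflexivity |]. intros x. apply eqmod_eq. ring.
  - destruct (pi_lift n) as [Hsg [Hgm [Hgp Hpe]]].
    destruct (recentre_spec (lift_sign n) (lift_shift n) (GG n) (L n) (L (S n)) Hs Hgm Hgp)
      as [H0 [Hm HL]].
    split; [apply is_sign_mul; auto |]. split; [now rewrite F0 |]. split; [| split].
    + intros x x' Hx. pose proof (Fm x x' Hx).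
      specialize (Hm (lift_map n x) (lift_map n x') ltac:(lra)). lra.
    + now rewrite FL.
    + intros x. eapply eqmod_trans; [apply pi_wd, Fe | eapply eqmod_trans; [apply Hpe |]].
      apply eqmod_eq. unfold recentre.
      replace (SG n * lift_sign n * (lift_sign n * (GG n (lift_sign n * lift_map n x + lift_shift n)
                 - GG n (lift_shift n))))
        with (SG n * (lift_sign n * lift_sign n) * (GG n (lift_sign n * lift_map n x + lift_shift n)
                 - GG n (lift_shift n))) by ring.
      rewrite (is_sign_sq _ Hs). ring.
Qed.

(* Each recentred lift fixes [0] and is 1-Lipschitz, so it moves [lift_map n x] towards [0]. *)
Lemma lift_map_cvg x : ex_finite_lim_seq (fun n => lift_map n x).
Proof.
  assert (Hstep : forall n, (0 <= lift_map n x -> 0 <= lift_map (S n) x <= lift_map n x) /\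
                            (lift_map n x <= 0 -> lift_map n x <= lift_map (S n) x <= 0)).
  { intros n. destruct (lift_map_spec n) as [Hs _]. destruct (pi_lift n) as [_ [Hgm [Hgp _]]].
    destruct (recentre_spec (lift_sign n) (lift_shift n) (GG n) (L n) (L (S n)) Hs Hgm Hgp)
      as [H0 [Hm _]].
    exact (nondecr_lip1_toward0 _ _ Hm H0). }
  assert (Hx0 : forall n, (0 <= x -> 0 <= lift_map n x) /\ (x <= 0 -> lift_map n x <= 0)).
  { intros n. destruct (lift_map_spec n) as [_ [F0 [Fm _]]].
    destruct (nondecr_lip1_toward0 (lift_map n) x Fm F0) as [Hpos Hneg].
    split; intros; [apply Hpos | apply Hneg]; auto. }
  destruct (Rle_dec 0 x) as [Hx | Hx].
  - apply ex_finite_lim_seq_decr with 0; intros n.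
    + apply (proj1 (Hstep n)), Hx0; auto.
    + apply Hx0; auto.
  - apply ex_finite_lim_seq_incr with 0; intros n.
    + apply (proj2 (Hstep n)), Hx0; lra.
    + apply Hx0; lra.
Qed.

End LiftComposition.

(** * The limit circle *)

Lemma is_lim_seq_abs_sub (u : nat -> R) (p : R) :
  is_lim_seq u p -> is_lim_seq (fun n => Rabs (u n - p)) 0.
Proof.
  intros H. replace 0 with (Rabs (p - p)) by (rewrite Rminus_diag; apply Rabs_R0).
  apply (is_lim_seq_abs (fun n => u n - p) (p - p)), is_lim_seq_minus'; auto.
  apply is_lim_seq_const.
Qed.

Lemma is_lim_seq_affine2 (c K1 K2 : R) (e f : nat -> R) : is_lim_seq e 0 -> is_lim_seq f 0 ->
  is_lim_seq (fun n => c + K1 * e n + K2 * f n) c.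
Proof.
  intros He Hf.
  pose proof (is_lim_seq_plus' _ _ _ _
    (is_lim_seq_plus' _ _ _ _ (is_lim_seq_const c)
       (is_lim_seq_mult' _ _ _ _ (is_lim_seq_const K1) He))
    (is_lim_seq_mult' _ _ _ _ (is_lim_seq_const K2) Hf)) as H.
  now replace (c + K1 * 0 + K2 * 0) with c in H by ring.
Qed.

(* Bounded differences keep the winding numbers in [cdist_perturb] bounded. *)
Lemma cdist_cvg (Ls u v : nat -> R) (Linf p q M : R) : 0 < Linf -> (forall i, Linf <= Ls i) ->
  is_lim_seq Ls Linf -> is_lim_seq u p -> is_lim_seq v q -> (forall i, Rabs (u i - v i) <= M) ->
  is_lim_seq (fun i => cdist (Ls i) (u i) (v i)) (cdist Linf p q).
Proof.
  intros HL HLi Hl Hu Hv HM.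
  set (c := cdist Linf p q).
  set (e := fun n => Rabs ((u n - v n) - (p - q))).
  set (f := fun n => Rabs (Ls n - Linf)).
  assert (He : is_lim_seq e 0)
    by (apply (is_lim_seq_abs_sub (fun n => u n - v n)), is_lim_seq_minus'; auto).
  assert (Hf : is_lim_seq f 0) by (apply is_lim_seq_abs_sub; auto).
  apply is_lim_seq_le_le with (u := fun n => c + (-1) * e n + (- (M / Linf + 1)) * f n)
                              (w := fun n => c + 1 * e n + (Rabs (p - q) / Linf + 1) * f n);
    [| apply is_lim_seq_affine2; auto ..].
  intros n. assert (HLn : 0 < Ls n) by (specialize (HLi n); lra). split.
  - pose proof (cdist_perturb (Ls n) Linf (u n) (v n) p q HLn HL) as Hp.
    assert (Rabs (u n - v n) / Ls n <= M / Linf).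
    { apply Rle_trans with (Rabs (u n - v n) / Linf).
      - apply Rmult_le_compat_l; [apply Rabs_pos | apply Rinv_le_contravar; auto].
      - apply Rmult_le_compat_r; [apply Rlt_le, Rinv_0_lt_compat | ]; auto. }
    replace (Rabs (p - q - (u n - v n))) with (e n) in Hp
      by (unfold e; rewrite <- Rabs_Ropp; f_equal; ring).
    replace (Rabs (Linf - Ls n)) with (f n) in Hp
      by (unfold f; rewrite <- Rabs_Ropp; f_equal; ring).
    assert ((Rabs (u n - v n) / Ls n + 1) * f n <= (M / Linf + 1) * f n)
      by (apply Rmult_le_compat_r; [unfold f; apply Rabs_pos | lra]).
    unfold c. lra.
  - pose proof (cdist_perturb Linf (Ls n) p q (u n) (v n) HL HLn). unfold c, e, f. lra.
Qed.

Section LimitCircle.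
Variables (L : nat -> R) (pi : nat -> R -> R) (SG RHO : nat -> R) (GG : nat -> R -> R).
Variable Linf : R.
Hypothesis HL : forall i, 0 < L i.
Hypothesis pi_wd : forall i x y, eqmod (L i) x y -> eqmod (L (S i)) (pi i x) (pi i y).
Hypothesis pi_lift : forall i, circle_lift (L i) (L (S i)) (pi i) (SG i) (RHO i) (GG i).
Hypothesis L_cvg : is_lim_seq L Linf.
Hypothesis Linf_pos : 0 < Linf.
Hypothesis Linf_le : forall n, Linf <= L n.

Definition lift_lim (x : R) : R := real (Lim_seq (fun n => lift_map SG RHO GG n x)).

Lemma lift_lim_spec x : is_lim_seq (fun n => lift_map SG RHO GG n x) (lift_lim x).
Proof.
  destruct (lift_map_cvg L pi SG RHO GG pi_wd pi_lift x) as [l Hl].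
  unfold lift_lim. now rewrite (is_lim_seq_unique _ _ Hl).
Qed.

Lemma lift_lim_lip1 x y : Rabs (lift_lim x - lift_lim y) <= Rabs (x - y).
Proof.
  assert (Hn : forall n, Rabs (lift_map SG RHO GG n x - lift_map SG RHO GG n y) <= Rabs (x - y)).
  { intros n. apply nondecr_lip1_abs, (lift_map_spec L pi SG RHO GG pi_wd pi_lift n). }
  pose proof (is_lim_seq_abs _ _
                (is_lim_seq_minus' _ _ _ _ (lift_lim_spec x) (lift_lim_spec y))) as H.
  exact (is_lim_seq_le _ (fun _ => Rabs (x - y)) _ _ Hn H (is_lim_seq_const _)).
Qed.

Lemma lift_lim_unique x (l : R) : is_lim_seq (fun n => lift_map SG RHO GG n x) l -> lift_lim x = l.
Proof. intros H. unfold lift_lim. now rewrite (is_lim_seq_unique _ _ H). Qed.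

Lemma lift_lim_0 : lift_lim 0 = 0.
Proof.
  apply lift_lim_unique, is_lim_seq_ext with (u := fun _ => 0); [| apply is_lim_seq_const].
  intros n. symmetry. apply (lift_map_spec L pi SG RHO GG pi_wd pi_lift n).
Qed.

Lemma lift_lim_L0 : lift_lim (L O) = Linf.
Proof.
  apply lift_lim_unique, is_lim_seq_ext with (u := L); auto.
  intros n. symmetry. apply (lift_map_spec L pi SG RHO GG pi_wd pi_lift n).
Qed.

Lemma lift_lim_onto t : exists x, eqmod Linf (lift_lim x) t.
Proof.
  destruct (eqmod_repr Linf t Linf_pos) as [t0 [k [Hk Ht0]]].
  assert (Hcont : continuity lift_lim) by (apply lip1_continuity, lift_lim_lip1).
  destruct (IVT_gen lift_lim 0 (L O) t0 Hcont) as [x [_ Hx]].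
  { rewrite lift_lim_0, lift_lim_L0. unfold Rmin, Rmax; destruct Rle_dec; lra. }
  exists x. rewrite Hx, Hk. apply eqmod_sym, eqmod_addZ.
Qed.

Lemma cdist_orbit_cvg x y :
  is_lim_seq (fun i => cdist (L i) (picomp pi i x) (picomp pi i y))
             (cdist Linf (lift_lim x) (lift_lim y)).
Proof.
  apply is_lim_seq_ext with
    (u := fun i => cdist (L i) (lift_map SG RHO GG i x) (lift_map SG RHO GG i y)).
  - intros n. destruct (lift_map_spec L pi SG RHO GG pi_wd pi_lift n) as [Hs [_ [_ [_ Fe]]]].
    rewrite (cdist_eqmod (L n) _ _ _ _ (HL n) (eqmod_sym _ _ _ (Fe x)) (eqmod_sym _ _ _ (Fe y))).
    symmetry. apply cdist_sign_affine; auto.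
  - apply cdist_cvg with (M := Rabs (x - y)); auto using lift_lim_spec.
    intros n. apply nondecr_lip1_abs, (lift_map_spec L pi SG RHO GG pi_wd pi_lift n).
Qed.

Lemma delta_lift_lim x y : delta L pi x y = cdist Linf (lift_lim x) (lift_lim y).
Proof. unfold delta. now rewrite (is_lim_seq_unique _ _ (cdist_orbit_cvg x y)). Qed.

End LimitCircle.

(** * Tightening sequences *)

Lemma decreasing_lengths_cvg (L q : nat -> R) (s : R) :
  (forall i, 0 <= q i) -> (forall i, L (S i) <= L i) -> (forall i, L i - L (S i) <= q i) ->
  is_series q s -> s < L O ->
  exists Linf : R, is_lim_seq L Linf /\ 0 < Linf /\ forall n, Linf <= L n.
Proof.
  intros Hq0 Hdec Hdrop Hs Hsl.
  assert (Hpart : forall n, sum_n q n <= s).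
  { apply is_lim_seq_incr_compare; [exact Hs |]. intros n. rewrite sum_Sn.
    unfold plus; simpl. specialize (Hq0 (S n)). lra. }
  assert (Hlow : forall n, L O - sum_n q n <= L (S n)).
  { induction n as [| n IH].
    - rewrite sum_O. specialize (Hdrop O). lra.
    - rewrite sum_Sn. unfold plus; simpl. specialize (Hdrop (S n)). lra. }
  assert (Hbound : forall n, L O - s <= L n).
  { intros [| n]; [specialize (Hpart O); rewrite sum_O in Hpart; specialize (Hq0 O); lra |].
    specialize (Hlow n). specialize (Hpart n). lra. }
  destruct (ex_finite_lim_seq_decr L (L O - s) Hdec Hbound) as [Linf HLinf].
  exists Linf. split; [exact HLinf | split].
  - pose proof (is_lim_seq_le (fun _ => L O - s) L (L O - s) Linf Hbound
                  (is_lim_seq_const _) HLinf) as H. simpl in H. lra.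
  - now apply is_lim_seq_decr_compare.
Qed.

Lemma eventually_const_limit {T Y : Type} (u : T -> nat -> Y) :
  (forall z, exists N, forall k, (N <= k)%nat -> u z k = u z N) ->
  exists f : T -> Y, forall z, exists N, forall k, (N <= k)%nat -> u z k = f z.
Proof.
  intros H. apply (functional_choice (fun z v => exists N, forall k, (N <= k)%nat -> u z k = v)).
  intros z. destruct (H z) as [N HN]. eauto.
Qed.

Section TighteningSequence.
Variables (X : Type) (d : X -> X -> R) (Rr : R) (L : nat -> R) (alpha : nat -> R -> X).
Variables (kind : nat -> bool) (a b : nat -> R) (iota phi pi : nat -> R -> R).
Hypothesis HT : tightening_seq d Rr L alpha kind a b iota phi pi.

Lemma tightening_lift i : exists s r g, circle_lift (L i) (L (S i)) (pi i) s r g.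
Proof.
  destruct HT as [HL [_ [Hwd [HA HB]]]]. destruct (kind i) eqn:Hk.
  - destruct (HA i Hk) as [HLL [Hba [Hui [Hii [Hup [Hip [_ [Hpio [c [m [cb [mb H]]]]]]]]]]]].
    destruct H as [Hm [Sc [Scb Hccb]]].
    apply (tightening_step_lift (L i) (L (S i)) (a i) (b i) (iota i) (phi i)
             (Qset L a b iota i)) with c cb m mb (Qbar L a b phi i); auto;
      try (intros; reflexivity); try lra.
    pose proof (HL O). lra.
  - destruct (HB i Hk) as [HLi [Hi [Hp [_ Hpio]]]].
    exists 1, 0, (fun y => y). split; [now left |]. split; [intros y y' H; lra |]. split.
    + intros y. now rewrite HLi.
    + intros y. eapply eqmod_trans; [apply (Hwd i y (iota i y)), eqmod_sym, Hi |].
      eapply eqmod_trans; [apply Hpio |]. rewrite HLi.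
      eapply eqmod_trans; [apply Hp | apply eqmod_eq; ring].
Qed.

Lemma tightening_lifts : exists (SG RHO : nat -> R) (GG : nat -> R -> R),
  forall i, circle_lift (L i) (L (S i)) (pi i) (SG i) (RHO i) (GG i).
Proof.
  destruct (functional_choice (fun i (t : R * R * (R -> R)) =>
              circle_lift (L i) (L (S i)) (pi i) (fst (fst t)) (snd (fst t)) (snd t)))
    as [f Hf].
  { intros i. destruct (tightening_lift i) as [s [r [g H]]]. now exists (s, r, g). }
  now exists (fun i => fst (fst (f i))), (fun i => snd (fst (f i))), (fun i => snd (f i)).
Qed.

Lemma tightening_lengths_cvg qlen : Qlengths L kind a b iota qlen ->
  (exists s, is_series qlen s /\ s < L O) ->
  exists Linf : R, is_lim_seq L Linf /\ 0 < Linf /\ forall n, Linf <= L n.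
Proof.
  intros HQl [s [Hs Hsl]]. destruct HT as [HL [_ [_ [HA HB]]]].
  assert (Hstep : forall i, 0 <= qlen i /\ L (S i) <= L i /\ L i - L (S i) <= qlen i).
  { intros i. destruct (kind i) eqn:Hk.
    - destruct (HA i Hk) as [HLL [Hba [Hui [Hii [Hup [Hip _]]]]]].
      destruct (proj1 (HQl i) Hk) as [c Sc].
      pose proof (tightening_step_length_drop (L i) (L (S i)) (a i) (b i) (iota i) (phi i)
                    (Qset L a b iota i) (HL i) (HL (S i))) as Hdrop.
      destruct Sc as [Hq Sc']. split; [exact Hq | split; [lra |]].
      apply Hdrop with c; auto; [pose proof (HL O); lra | intros; reflexivity | now split].
    - destruct (HB i Hk) as [HLi _]. rewrite (proj2 (HQl i) Hk). lra. }
  apply (decreasing_lengths_cvg L qlen s); auto; apply Hstep.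
Qed.

Hypothesis HCD : completely_disjoint L kind a b iota phi.

Lemma Pint_eqmod j y y' : eqmod (L j) y y' ->
  Pint L kind a b iota phi j y -> Pint L kind a b iota phi j y'.
Proof.
  destruct HT as [_ [_ [_ [_ HB]]]].
  revert y y'. induction j as [| j IH]; intros y y' Hy H; simpl in *; auto.
  destruct (kind j) eqn:Hk.
  - destruct H as [t [Ht [HP He]]]. exists t. split; auto. split; auto.
    eapply eqmod_trans; [apply eqmod_sym, Hy | exact He].
  - destruct (HB j Hk) as [HL _]. rewrite HL in Hy. eapply IH; eauto.
Qed.

Lemma alpha_orbit_step x k :
  (kind k = false \/ ~ Qset L a b iota k (picomp pi k x)) ->
  alpha (S k) (picomp pi (S k) x) = alpha k (picomp pi k x).
Proof.
  destruct HT as [HLp [Hc [Hwd [HA HB]]]]. simpl. set (z := picomp pi k x).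
  intros Hkz. destruct (kind k) eqn:Hk.
  - destruct Hkz as [H | H]; [discriminate |]. apply NNPP in H. destruct H as [t [Ht He]].
    destruct (HA k Hk) as [_ [_ [_ [_ [_ [_ [Hal [Hpio _]]]]]]]].
    transitivity (alpha (S k) (phi k t)).
    + apply (proj1 (Hc (S k))). eapply eqmod_trans; [apply Hwd, He | apply Hpio; lra].
    + rewrite <- Hal by lra. apply (proj1 (Hc k)), eqmod_sym, He.
  - destruct (HB k Hk) as [HL [Hi [Hp [Hal Hpio]]]].
    transitivity (alpha (S k) (phi k z)).
    + apply (proj1 (Hc (S k))). eapply eqmod_trans; [apply Hwd, eqmod_sym, Hi | apply Hpio].
    + rewrite <- Hal. apply (proj1 (Hc k)), Hi.
Qed.

Lemma orbit_leaves_Pint x k : kind k = true -> Qset L a b iota k (picomp pi k x) ->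
  ~ Pint L kind a b iota phi (S k) (picomp pi (S k) x).
Proof.
  destruct HT as [HLp [Hc [Hwd [HA HB]]]]. intros Hk HQ.
  destruct (HA k Hk) as [_ [_ [_ [_ [_ [_ [_ [_ [c [m [cb [mb [Hm [Sc [Scb Hccb]]]]]]]]]]]]]]].
  destruct Sc as [_ [_ [_ HQc]]]. destruct Scb as [Hmb [_ [_ HQb]]].
  apply HQc in HQ. destruct HQ as [s [Hs Hse]].
  assert (Hb : Qbar L a b phi k (picomp pi (S k) x)).
  { apply HQb. exists (s * mb / m). split.
    - apply rescale_in_range; lra.
    - simpl. eapply eqmod_trans; [apply Hwd, Hse | apply Hccb; auto]. }
  intros HP. simpl in HP. rewrite Hk in HP. destruct HP as [t [Ht [_ He]]].
  apply Hb. exists t. split; auto.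
Qed.

Lemma orbit_stays_off_Pint x k : ~ Pint L kind a b iota phi k (picomp pi k x) ->
  ~ Pint L kind a b iota phi (S k) (picomp pi (S k) x).
Proof.
  destruct HT as [HLp [Hc [Hwd [HA HB]]]]. intros HnP HP.
  simpl in HP. set (z := picomp pi k x) in *.
  destruct (kind k) eqn:Hk.
  - assert (HnQ : ~ Qset L a b iota k z) by (intro HQ; apply HnP, (HCD k Hk); auto).
    apply NNPP in HnQ. destruct HnQ as [t0 [Ht0 He0]].
    destruct HP as [t [Ht [HPi He]]].
    destruct (HA k Hk) as [_ [_ [_ [_ [_ [Hinj [_ [Hpio _]]]]]]]].
    assert (t = t0).
    { apply Hinj; auto. eapply eqmod_trans; [apply eqmod_sym, He |].
      eapply eqmod_trans; [apply Hwd, He0 | apply Hpio; lra]. }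
    subst t0. apply HnP. eapply Pint_eqmod; [apply eqmod_sym, He0 | exact HPi].
  - destruct (HB k Hk) as [HL [Hi [Hp [Hal Hpio]]]].
    apply HnP. eapply Pint_eqmod; [| exact HP]. rewrite <- HL.
    eapply eqmod_trans; [apply Hwd, eqmod_sym, Hi |].
    eapply eqmod_trans; [apply Hpio | rewrite HL; apply Hp].
Qed.

(* Once the orbit of [x] has met a segment [Q_k], it stays outside [P_(0, j)] for [j > k],
   hence, by complete disjointness, outside every later [Q_j]. *)
Lemma alpha_orbit_eventually_const x :
  exists N, forall k, (N <= k)%nat -> alpha k (picomp pi k x) = alpha N (picomp pi N x).
Proof.
  destruct (classic (exists k, kind k = true /\ Qset L a b iota k (picomp pi k x)))
    as [[k0 [Hk0 HQ0]] | Hnever].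
  - exists (S k0).
    assert (Hoff : forall j, (S k0 <= j)%nat -> ~ Pint L kind a b iota phi j (picomp pi j x)).
    { intros j Hj. induction Hj as [| j Hj IH].
      - now apply orbit_leaves_Pint.
      - now apply orbit_stays_off_Pint. }
    intros k Hk. induction Hk as [| k Hk IH]; auto. rewrite <- IH.
    apply alpha_orbit_step. destruct (kind k) eqn:Hkk; [right | now left].
    intro HQ. apply (Hoff k Hk), (HCD k Hkk); auto.
  - exists O. intros k _. induction k as [| k IH]; auto. rewrite <- IH.
    apply alpha_orbit_step. destruct (kind k) eqn:Hkk; [right | now left].
    intro HQ. apply Hnever. eauto.
Qed.

End TighteningSequence.

Lemma qmap_eq_delta0 L pi x w : qmap L pi w = qmap L pi x -> delta L pi w w = 0 ->
  delta L pi x w = 0.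
Proof.
  intros Hq Hww. apply (f_equal (@proj1_sig _ _)) in Hq. simpl in Hq.
  now rewrite <- (f_equal (fun P : R -> Prop => P w) Hq).
Qed.

Lemma section_onto L pi (sigma : Sinf L pi -> R) (F : R -> R) Linf : 0 < Linf ->
  (forall z, qmap L pi (sigma z) = z) ->
  (forall x y, delta L pi x y = cdist Linf (F x) (F y)) ->
  (forall t, exists x, eqmod Linf (F x) t) -> forall t, exists z, eqmod Linf (F (sigma z)) t.
Proof.
  intros HLinf Hsig Hdelta Honto t. destruct (Honto t) as [x Hx].
  exists (qmap L pi x). eapply eqmod_trans; [| exact Hx].
  apply eqmod_sym, cdist_eq0_eqmod; auto. rewrite <- Hdelta.
  apply qmap_eq_delta0; [apply Hsig | rewrite Hdelta; apply cdist_refl; auto].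
Qed.

Lemma le_lim_of_eventually {X : Type} (d : X -> X -> R) (u v : nat -> X) (c : nat -> R)
  (p q : X) (l Rr : R) :
  (exists N, forall n, (N <= n)%nat -> u n = p) -> (exists N, forall n, (N <= n)%nat -> v n = q) ->
  (forall n, d (u n) (v n) <= c n + Rr) -> is_lim_seq c l -> d p q <= l + Rr.
Proof.
  intros [N1 Hu] [N2 Hv] Hle Hc.
  assert (Hev : eventually (fun n => d p q - Rr <= c n)).
  { exists (max N1 N2). intros n Hn. rewrite <- (Hu n), <- (Hv n) by lia.
    specialize (Hle n). lra. }
  pose proof (is_lim_seq_le_loc _ _ _ _ Hev (is_lim_seq_const _) Hc) as H. simpl in H. lra.
Qed.

Theorem lemma4p3 (X : Type) (d : X -> X -> R) (Rr : R)
  (L : nat -> R) (alpha : nat -> R -> X) (kind : nat -> bool) (a b : nat -> R)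
  (iota phi pi : nat -> R -> R) (qlen : nat -> R) (sigma : Sinf L pi -> R) :
  0 <= Rr -> is_metric d -> rough_geodesic d Rr ->
  tightening_seq d Rr L alpha kind a b iota phi pi ->
  completely_disjoint L kind a b iota phi ->
  Qlengths L kind a b iota qlen ->
  (exists s, is_series qlen s /\ s < L 0%nat) ->
  (forall z, qmap L pi (sigma z) = z) ->
  exists alpha_inf : Sinf L pi -> X,
    (forall z eps, 0 < eps -> exists N : nat, forall i : nat, (N <= i)%nat ->
       d (alpha i (picomp pi i (sigma z))) (alpha_inf z) < eps) /\
    (exists Linf, 0 < Linf /\ exists e : Sinf L pi -> R,
       (forall z w, delta L pi (sigma z) (sigma w) = cdist Linf (e z) (e w)) /\
       (forall t, exists z, eqmod Linf (e z) t)) /\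
    (forall z w, d (alpha_inf z) (alpha_inf w) <= delta L pi (sigma z) (sigma w) + Rr).
Proof.
  intros _ [_ [Hd0 _]] _ HT HCD HQl Hsum Hsig.
  pose proof HT as [HL [Hcirc [Hwd _]]].
  destruct (tightening_lifts X d Rr L alpha kind a b iota phi pi HT) as [SG [RHO [GG Hlift]]].
  destruct (tightening_lengths_cvg X d Rr L alpha kind a b iota phi pi HT qlen HQl Hsum)
    as [Linf [HLinf [HLinf0 HLinf_le]]].
  destruct (eventually_const_limit (fun z k => alpha k (picomp pi k (sigma z))))
    as [alpha_inf Halpha].
  { intros z. apply (alpha_orbit_eventually_const X d Rr L alpha kind a b iota phi pi HT HCD). }
  set (F := lift_lim SG RHO GG).
  assert (Hdelta : forall x y, delta L pi x y = cdist Linf (F x) (F y))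
    by (intros; apply (delta_lift_lim L pi SG RHO GG Linf); auto).
  exists alpha_inf. split; [| split].
  - intros z eps Heps. destruct (Halpha z) as [N HN]. exists N. intros i Hi.
    rewrite HN, (proj2 (Hd0 _ _) eq_refl) by auto. exact Heps.
  - exists Linf. split; auto. exists (fun z => F (sigma z)). split; [intros; apply Hdelta |].
    apply section_onto; auto. apply (lift_lim_onto L pi SG RHO GG Linf); auto.
  - intros z w. rewrite Hdelta.
    apply (le_lim_of_eventually d (fun n => alpha n (picomp pi n (sigma z)))
             (fun n => alpha n (picomp pi n (sigma w)))
             (fun n => cdist (L n) (picomp pi n (sigma z)) (picomp pi n (sigma w))));
      [apply Halpha | apply Halpha | intros n; apply (Hcirc n) |].
    apply (cdist_orbit_cvg L pi SG RHO GG Linf); auto.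
Qed.
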